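(* Let $\pi:\mathcal{A}(\mathbb{C}P^2_q)\to\mathcal{B}(\mathcal{H})$ be a $*$-representation by bounded operators on a Hilbert space with $\ker\pi(p_{11})=\{0\}$. Then there exist bounded operators $Z_1,Z_2,Z_3$ on $\mathcal{H}$ with $Z_1$ positive and $\ker Z_1=\{0\}$ such that $$\big(\pi(p_{ij})\big)_{i,j}=\begin{pmatrix}Z_1^2&qZ_2Z_1&qZ_3Z_1\\ qZ_1Z_2^*&Z_2^*Z_2&Z_2^*Z_3\\ qZ_1Z_3^*&Z_3^*Z_2&Z_3^*Z_3\end{pmatrix},$$ the assignment $\tilde\pi(z_i):=Z_i$ extends to a $*$-representation $\tilde\pi:\mathcal{A}(S^5_q)\to\mathcal{B}(\mathcal{H})$, $\tilde\pi(z_i^*z_j)=\pi(p_{ij})$ for all $i,j$ (so $\tilde\pi$ restricts to $\pi$ on $\mathcal{A}(\mathbb{C}P^2_q)$), and $\tilde\pi$ is irreducible whenever $\pi$ is irreducible.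
   Context: Fix $0<q<1$. $\mathcal{A}(S^5_q)$ is the unital $*$-algebra generated by $z_1,z_2,z_3$ and adjoints with relations $z_iz_j=qz_jz_i$ ($i<j$), $z_i^*z_j=qz_jz_i^*$ ($i\ne j$), $[z_1^*,z_1]=0$, $[z_2^*,z_2]=(1-q^2)z_1z_1^*$, $[z_3^*,z_3]=(1-q^2)(z_1z_1^*+z_2z_2^* )$, $z_1z_1^*+z_2z_2^*+z_3z_3^*=1$. $\mathcal{A}(\mathbb{C}P^2_q)$ is the unital $*$-subalgebra generated by $p_{ij}:=z_i^*z_j$, $i,j=1,2,3$. Representations are unital $*$-representations. *)

From Stdlib Require Import Reals ClassicalEpsilon.
Open Scope R_scope.

Record C := mkC { Re : R; Im : R }.
Definition C0 : C := mkC 0 0.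
Definition C1 : C := mkC 1 0.
Definition RtoC (r : R) : C := mkC r 0.
Definition Cadd (a b : C) : C := mkC (Re a + Re b) (Im a + Im b).
Definition Cmul (a b : C) : C :=
  mkC (Re a * Re b - Im a * Im b) (Re a * Im b + Im a * Re b).
Definition Cconj (a : C) : C := mkC (Re a) (- Im a).

(* inner product linear in the first, conjugate-linear in the second argument *)
Record Hilbert := {
  carrier :> Type;
  vzero : carrier;
  vadd : carrier -> carrier -> carrier;
  vopp : carrier -> carrier;
  vscal : C -> carrier -> carrier;
  inner : carrier -> carrier -> C;
  vadd_assoc : forall x y z, vadd x (vadd y z) = vadd (vadd x y) z;
  vadd_comm : forall x y, vadd x y = vadd y x;
  vadd_0 : forall x, vadd vzero x = x;
  vadd_opp : forall x, vadd x (vopp x) = vzero;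
  vscal_1 : forall x, vscal C1 x = x;
  vscal_assoc : forall a b x, vscal a (vscal b x) = vscal (Cmul a b) x;
  vscal_distr_v : forall a x y, vscal a (vadd x y) = vadd (vscal a x) (vscal a y);
  vscal_distr_c : forall a b x, vscal (Cadd a b) x = vadd (vscal a x) (vscal b x);
  inner_add_l : forall x y z, inner (vadd x y) z = Cadd (inner x z) (inner y z);
  inner_scal_l : forall a x y, inner (vscal a x) y = Cmul a (inner x y);
  inner_sym : forall x y, inner y x = Cconj (inner x y);
  inner_pos : forall x, 0 <= Re (inner x x);
  inner_def : forall x, inner x x = C0 -> x = vzero;
  complete : forall u : nat -> carrier,
    (forall eps, eps > 0 -> exists N, forall n m, (n >= N)%nat -> (m >= N)%nat ->
       sqrt (Re (inner (vadd (u n) (vopp (u m))) (vadd (u n) (vopp (u m))))) < eps) ->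
    exists l, forall eps, eps > 0 -> exists N, forall n, (n >= N)%nat ->
       sqrt (Re (inner (vadd (u n) (vopp l)) (vadd (u n) (vopp l)))) < eps
}.

Arguments vzero {h}.
Arguments vadd {h}.
Arguments vopp {h}.
Arguments vscal {h}.
Arguments inner {h}.

Definition norm {H : Hilbert} (x : H) : R := sqrt (Re (inner x x)).

Definition converges {H : Hilbert} (u : nat -> H) (l : H) : Prop :=
  forall eps, eps > 0 -> exists N, forall n, (n >= N)%nat ->
    norm (vadd (u n) (vopp l)) < eps.

Definition op (H : Hilbert) := H -> H.

Definition linear_op {H : Hilbert} (T : op H) : Prop :=
  (forall x y, T (vadd x y) = vadd (T x) (T y)) /\
  (forall a x, T (vscal a x) = vscal a (T x)).

Definition bounded_op {H : Hilbert} (T : op H) : Prop :=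
  linear_op T /\ exists M, forall x, norm (T x) <= M * norm x.

(* the Hilbert-space adjoint (unique when it exists, which it does for bounded T) *)
Definition adjoint {H : Hilbert} (T : op H) : op H :=
  epsilon (inhabits T) (fun S => forall x y, inner (T x) y = inner x (S y)).

Definition positive_op {H : Hilbert} (T : op H) : Prop :=
  (forall x y, inner (T x) y = inner x (T y)) /\ (forall x, 0 <= Re (inner (T x) x)).

Definition trivial_kernel {H : Hilbert} (T : op H) : Prop :=
  forall x, T x = vzero -> x = vzero.

Definition closed_subspace {H : Hilbert} (M : H -> Prop) : Prop :=
  M vzero /\ (forall x y, M x -> M y -> M (vadd x y)) /\
  (forall a x, M x -> M (vscal a x)) /\
  (forall u l, (forall n, M (u n)) -> converges u l -> M l).

Inductive term (G : Type) : Type :=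
| tGen : G -> term G
| tZero : term G
| tOne : term G
| tAdd : term G -> term G -> term G
| tMul : term G -> term G -> term G
| tScal : C -> term G -> term G
| tStar : term G -> term G.
Arguments tGen {G}. Arguments tZero {G}. Arguments tOne {G}. Arguments tAdd {G}.
Arguments tMul {G}. Arguments tScal {G}. Arguments tStar {G}.

(* equality in the unital *-algebra over C presented by the relations rel *)
Inductive aeq {G : Type} (rel : term G -> term G -> Prop) : term G -> term G -> Prop :=
| aeq_rel : forall a b, rel a b -> aeq rel a b
| aeq_refl : forall a, aeq rel a a
| aeq_sym : forall a b, aeq rel a b -> aeq rel b a
| aeq_trans : forall a b c, aeq rel a b -> aeq rel b c -> aeq rel a c
| aeq_add : forall a a' b b', aeq rel a a' -> aeq rel b b' -> aeq rel (tAdd a b) (tAdd a' b')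
| aeq_mul : forall a a' b b', aeq rel a a' -> aeq rel b b' -> aeq rel (tMul a b) (tMul a' b')
| aeq_scal : forall c a a', aeq rel a a' -> aeq rel (tScal c a) (tScal c a')
| aeq_star : forall a a', aeq rel a a' -> aeq rel (tStar a) (tStar a')
| ax_add_assoc : forall a b c, aeq rel (tAdd a (tAdd b c)) (tAdd (tAdd a b) c)
| ax_add_comm : forall a b, aeq rel (tAdd a b) (tAdd b a)
| ax_add_0 : forall a, aeq rel (tAdd tZero a) a
| ax_add_opp : forall a, aeq rel (tAdd a (tScal (RtoC (-1)) a)) tZero
| ax_mul_assoc : forall a b c, aeq rel (tMul a (tMul b c)) (tMul (tMul a b) c)
| ax_mul_1l : forall a, aeq rel (tMul tOne a) a
| ax_mul_1r : forall a, aeq rel (tMul a tOne) a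
| ax_mul_addl : forall a b c, aeq rel (tMul (tAdd a b) c) (tAdd (tMul a c) (tMul b c))
| ax_mul_addr : forall a b c, aeq rel (tMul a (tAdd b c)) (tAdd (tMul a b) (tMul a c))
| ax_scal_1 : forall a, aeq rel (tScal C1 a) a
| ax_scal_assoc : forall c d a, aeq rel (tScal c (tScal d a)) (tScal (Cmul c d) a)
| ax_scal_addv : forall c a b, aeq rel (tScal c (tAdd a b)) (tAdd (tScal c a) (tScal c b))
| ax_scal_addc : forall c d a, aeq rel (tScal (Cadd c d) a) (tAdd (tScal c a) (tScal d a))
| ax_scal_mull : forall c a b, aeq rel (tMul (tScal c a) b) (tScal c (tMul a b))
| ax_scal_mulr : forall c a b, aeq rel (tMul a (tScal c b)) (tScal c (tMul a b))
| ax_star_inv : forall a, aeq rel (tStar (tStar a)) a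
| ax_star_add : forall a b, aeq rel (tStar (tAdd a b)) (tAdd (tStar a) (tStar b))
| ax_star_mul : forall a b, aeq rel (tStar (tMul a b)) (tMul (tStar b) (tStar a))
| ax_star_scal : forall c a, aeq rel (tStar (tScal c a)) (tScal (Cconj c) (tStar a))
| ax_star_one : aeq rel (tStar tOne) tOne.

Fixpoint eval {G : Type} {H : Hilbert} (v : G -> op H) (t : term G) : op H :=
  match t with
  | tGen g => v g
  | tZero => fun _ => vzero
  | tOne => fun x => x
  | tAdd a b => fun x => vadd (eval v a x) (eval v b x)
  | tMul a b => fun x => eval v a (eval v b x)
  | tScal c a => fun x => vscal c (eval v a x)
  | tStar a => adjoint (eval v a)
  end.

Inductive idx := I1 | I2 | I3.

Definition idx_lt (i j : idx) : Prop :=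
  match i, j with
  | I1, I2 | I1, I3 | I2, I3 => True
  | _, _ => False
  end.

Definition z (i : idx) : term idx := tGen i.

Inductive s5rel (q : R) : term idx -> term idx -> Prop :=
| s5_comm : forall i j, idx_lt i j ->
    s5rel q (tMul (z i) (z j)) (tScal (RtoC q) (tMul (z j) (z i)))
| s5_star : forall i j, i <> j ->
    s5rel q (tMul (tStar (z i)) (z j)) (tScal (RtoC q) (tMul (z j) (tStar (z i))))
| s5_c1 : s5rel q (tMul (tStar (z I1)) (z I1)) (tMul (z I1) (tStar (z I1)))
| s5_c2 : s5rel q (tMul (tStar (z I2)) (z I2))
    (tAdd (tMul (z I2) (tStar (z I2))) (tScal (RtoC (1 - q ^ 2)) (tMul (z I1) (tStar (z I1)))))
| s5_c3 : s5rel q (tMul (tStar (z I3)) (z I3))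
    (tAdd (tMul (z I3) (tStar (z I3)))
       (tScal (RtoC (1 - q ^ 2))
          (tAdd (tMul (z I1) (tStar (z I1))) (tMul (z I2) (tStar (z I2))))))
| s5_sphere : s5rel q
    (tAdd (tAdd (tMul (z I1) (tStar (z I1))) (tMul (z I2) (tStar (z I2))))
          (tMul (z I3) (tStar (z I3)))) tOne.

Definition S5_rep (q : R) (H : Hilbert) (Z : idx -> op H) : Prop :=
  (forall i, bounded_op (Z i)) /\
  (forall f g, aeq (s5rel q) f g -> eval Z f = eval Z g).

Fixpoint cp2_emb (t : term (idx * idx)) : term idx :=
  match t with
  | tGen (i, j) => tMul (tStar (z i)) (z j)
  | tZero => tZero
  | tOne => tOne
  | tAdd a b => tAdd (cp2_emb a) (cp2_emb b)
  | tMul a b => tMul (cp2_emb a) (cp2_emb b)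
  | tScal c a => tScal c (cp2_emb a)
  | tStar a => tStar (cp2_emb a)
  end.

Definition pvals {H : Hilbert} (P : idx -> idx -> op H) : idx * idx -> op H :=
  fun ij => P (fst ij) (snd ij).

(* *-representation pi of A(CP^2_q) with pi(p_ij) = P i j: each element of
   A(CP^2_q) is a *-polynomial f in the p_ij; pi(f) := eval f, which must be
   well defined, i.e. depend only on the element cp2_emb f of A(S^5_q). *)
Definition CP2_rep (q : R) (H : Hilbert) (P : idx -> idx -> op H) : Prop :=
  (forall i j, bounded_op (P i j)) /\
  (forall f g, aeq (s5rel q) (cp2_emb f) (cp2_emb g) -> eval (pvals P) f = eval (pvals P) g).

Definition irreducible_family {H : Hilbert} (A : op H -> Prop) : Prop :=
  (exists x : H, x <> vzero) /\
  forall M : H -> Prop, closed_subspace M ->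
    (forall T x, A T -> M x -> M (T x)) ->
    (forall x, M x -> x = vzero) \/ (forall x, M x).

Definition CP2_irreducible {H : Hilbert} (P : idx -> idx -> op H) : Prop :=
  irreducible_family (fun T => exists f, T = eval (pvals P) f).

Definition S5_irreducible {H : Hilbert} (Z : idx -> op H) : Prop :=
  irreducible_family (fun T => exists f, T = eval Z f).

Definition ocomp {H : Hilbert} (S T : op H) : op H := fun x => S (T x).
Definition qscal {H : Hilbert} (q : R) (T : op H) : op H := fun x => vscal (RtoC q) (T x).

(* The relations of A(S^5_q) give p11 = p11^2 + p12 p21 + p13 p31, hence
   <P11 x, x> = |P11 x|^2 + |P21 x|^2 + |P31 x|^2: P11 is positive and
   |P_k1 x| <= |P11^(1/2) x|.  Put Z1 := P11^(1/2); it is injective, self-adjoint,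
   hence has dense range, so the estimate yields bounded E_k with E_k Z1 = P_k1
   (Douglas' factorisation) and we set Z_k := E_k^*.  The commutation rules of the
   p_ij with p11 (e.g. p11 p_k1 = q^-2 p_k1 p11) pass to the square root by
   uniqueness of positive square roots, giving Z1 E_k = q^-1 E_k Z1.  Every defining
   relation of A(S^5_q) between the Z_i and every identity Z_i^* Z_j = P_ij is then
   checked after composing with Z1 on both sides, which is legitimate because Z1 is
   injective with dense range.  Irreducibility transfers because every pi(f) is the
   image of an element of A(S^5_q). *)

From Pilot Require Import Defs.
From Stdlib Require Import Reals Psatz FunctionalExtensionality ClassicalEpsilon Classical
  ZArith Morphisms.
(* Defs is re-imported so that its complex numbers C shadow the binomial C of Reals *)
Import Defs.
Open Scope R_scope.

Arguments vadd_assoc {h}. Arguments vadd_comm {h}. Arguments vadd_0 {h}. Arguments vadd_opp {h}.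
Arguments vscal_1 {h}. Arguments vscal_assoc {h}. Arguments vscal_distr_v {h}.
Arguments vscal_distr_c {h}. Arguments inner_add_l {h}. Arguments inner_scal_l {h}.
Arguments inner_sym {h}. Arguments inner_pos {h}. Arguments inner_def {h}. Arguments complete {h}.

(** * 1. Scalars, vectors, inner products and norms *)

Lemma C_ext (a b : C) : Re a = Re b -> Im a = Im b -> a = b.
Proof. destruct a, b; simpl; intros; subst; reflexivity. Qed.

Ltac Ceq := apply C_ext; simpl; try ring; try lra.

Definition Ci : C := mkC 0 1.

Definition Cinv (a : C) : C :=
  mkC (Re a / (Re a * Re a + Im a * Im a)) (- Im a / (Re a * Re a + Im a * Im a)).

Definition Cabs (a : C) : R := sqrt (Re a * Re a + Im a * Im a).

Lemma Cmul_RtoC a b : Cmul (RtoC a) (RtoC b) = RtoC (a * b).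
Proof. Ceq. Qed.
Lemma Cadd_RtoC a b : Cadd (RtoC a) (RtoC b) = RtoC (a + b).
Proof. Ceq. Qed.
Lemma Cconj_RtoC a : Cconj (RtoC a) = RtoC a.
Proof. Ceq. Qed.
Lemma RtoC_1 : RtoC 1 = C1. Proof. Ceq. Qed.
Lemma RtoC_0 : RtoC 0 = C0. Proof. Ceq. Qed.
Lemma Cconj_add a b : Cconj (Cadd a b) = Cadd (Cconj a) (Cconj b).
Proof. Ceq. Qed.
Lemma Cconj_mul a b : Cconj (Cmul a b) = Cmul (Cconj a) (Cconj b).
Proof. Ceq. Qed.
Lemma Cconj_conj a : Cconj (Cconj a) = a.
Proof. Ceq. Qed.

Lemma Cnorm_pos (a : C) : a <> C0 -> Re a * Re a + Im a * Im a > 0.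
Proof.
  intros Ha. destruct a as [a1 a2]; simpl.
  destruct (Req_dec a1 0); destruct (Req_dec a2 0); try nra. subst. exfalso; apply Ha. Ceq.
Qed.

Lemma Cmul_inv_cancel (a b : C) : b <> C0 -> Cmul (Cmul a (Cinv b)) b = a.
Proof.
  intros Hb. pose proof (Cnorm_pos b Hb). destruct a as [a1 a2], b as [b1 b2]; simpl in *.
  unfold Cinv; apply C_ext; simpl; field; lra.
Qed.

Lemma Cabs_nonneg a : 0 <= Cabs a.
Proof. apply sqrt_pos. Qed.

Lemma Cabs_zero (a : C) : Cabs a = 0 -> a = C0.
Proof. unfold Cabs. intros E. apply sqrt_eq_0 in E; [|nra]. destruct a; simpl in *. Ceq; nra. Qed.

Definition vsub {H : Hilbert} (x y : H) : H := vadd x (vopp y).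

Lemma vadd_0r {H : Hilbert} (x : H) : vadd x vzero = x.
Proof. rewrite vadd_comm; apply vadd_0. Qed.

Lemma vadd_cancel_l {H : Hilbert} (a b c : H) : vadd a b = vadd a c -> b = c.
Proof.
  intros E. assert (E2 : vadd (vopp a) (vadd a b) = vadd (vopp a) (vadd a c)) by (rewrite E; auto).
  rewrite !vadd_assoc, (vadd_comm (vopp a) a), vadd_opp, !vadd_0 in E2. exact E2.
Qed.

Lemma vscal_C0 {H : Hilbert} (x : H) : vscal C0 x = vzero.
Proof.
  apply (vadd_cancel_l (vscal C0 x)). rewrite vadd_0r, <- vscal_distr_c. f_equal. Ceq.
Qed.

Lemma vscal_0 {H : Hilbert} (a : C) : vscal a (@vzero H) = vzero.
Proof.
  rewrite <- (vscal_C0 vzero), vscal_assoc, vscal_C0.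
  replace (Cmul a C0) with C0 by Ceq. apply vscal_C0.
Qed.

Lemma vopp_scal {H : Hilbert} (x : H) : vopp x = vscal (RtoC (-1)) x.
Proof.
  apply (vadd_cancel_l x). rewrite vadd_opp.
  transitivity (vadd (vscal C1 x) (vscal (RtoC (-1)) x)); [| rewrite vscal_1; reflexivity].
  rewrite <- vscal_distr_c. replace (Cadd C1 (RtoC (-1))) with C0 by Ceq.
  rewrite vscal_C0; reflexivity.
Qed.

Lemma vadd_opp_l {H : Hilbert} (x : H) : vadd (vopp x) x = vzero.
Proof. rewrite vadd_comm; apply vadd_opp. Qed.

Lemma vopp_opp {H : Hilbert} (x : H) : vopp (vopp x) = x.
Proof.
  rewrite !vopp_scal, vscal_assoc. replace (Cmul (RtoC (-1)) (RtoC (-1))) with C1 by Ceq.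
  apply vscal_1.
Qed.

Lemma vopp_add {H : Hilbert} (x y : H) : vopp (vadd x y) = vadd (vopp x) (vopp y).
Proof. rewrite !vopp_scal. apply vscal_distr_v. Qed.

Lemma vopp_zero {H : Hilbert} : vopp (@vzero H) = vzero.
Proof. rewrite vopp_scal; apply vscal_0. Qed.

Lemma vsub_eq0 {H : Hilbert} (x y : H) : vsub x y = vzero -> x = y.
Proof.
  unfold vsub; intros E. assert (E2 : vadd (vadd x (vopp y)) y = vadd vzero y) by (rewrite E; auto).
  rewrite <- vadd_assoc, vadd_opp_l, vadd_0r, vadd_0 in E2. exact E2.
Qed.

Lemma vsub_self {H : Hilbert} (x : H) : vsub x x = vzero.
Proof. apply vadd_opp. Qed.

Lemma vscal_opp {H : Hilbert} a (x : H) : vscal a (vopp x) = vopp (vscal a x).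
Proof. rewrite !vopp_scal, !vscal_assoc. f_equal. Ceq. Qed.

Lemma inner_add_r {H : Hilbert} (x y z : H) : inner x (vadd y z) = Cadd (inner x y) (inner x z).
Proof. rewrite inner_sym, inner_add_l, Cconj_add, <- !inner_sym. reflexivity. Qed.

Lemma inner_scal_r {H : Hilbert} a (x y : H) : inner x (vscal a y) = Cmul (Cconj a) (inner x y).
Proof. rewrite inner_sym, inner_scal_l, Cconj_mul, <- inner_sym. reflexivity. Qed.

Lemma inner_0_l {H : Hilbert} (y : H) : inner vzero y = C0.
Proof. rewrite <- (vscal_C0 vzero), inner_scal_l. Ceq. Qed.

Lemma inner_0_r {H : Hilbert} (y : H) : inner y vzero = C0.
Proof. rewrite inner_sym, inner_0_l. Ceq. Qed.

Lemma inner_opp_l {H : Hilbert} (x y : H) : inner (vopp x) y = Cmul (RtoC (-1)) (inner x y).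
Proof. rewrite vopp_scal, inner_scal_l. reflexivity. Qed.
Lemma inner_opp_r {H : Hilbert} (x y : H) : inner x (vopp y) = Cmul (RtoC (-1)) (inner x y).
Proof. rewrite vopp_scal, inner_scal_r, Cconj_RtoC. reflexivity. Qed.

Lemma inner_self_im {H : Hilbert} (x : H) : Im (inner x x) = 0.
Proof.
  pose proof (inner_sym x x) as E. destruct (inner x x) as [a b]. unfold Cconj in E; simpl in *.
  injection E; intros; lra.
Qed.

Lemma inner_ext_r {H : Hilbert} (x x' : H) : (forall y, inner x y = inner x' y) -> x = x'.
Proof.
  intros Hy. apply vsub_eq0, inner_def. unfold vsub.
  rewrite inner_add_l, inner_opp_l, Hy. Ceq.
Qed.

Lemma inner_ext_l {H : Hilbert} (x x' : H) : (forall y, inner y x = inner y x') -> x = x'.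
Proof.
  intros Hy. apply inner_ext_r. intros y. rewrite (inner_sym y x), (inner_sym y x'), Hy. reflexivity.
Qed.

(* Vector identities are proved by testing against an arbitrary vector. *)
Ltac vexp := unfold vsub in *; repeat (rewrite ?inner_add_l, ?inner_scal_l, ?inner_opp_l, ?inner_0_l).
Ltac veq := apply inner_ext_r; intro; vexp; Ceq.

Definition nsq {H : Hilbert} (x : H) : R := Re (inner x x).
Definition rip {H : Hilbert} (x y : H) : R := Re (inner x y).

Lemma nsq_nonneg {H : Hilbert} (x : H) : 0 <= nsq x.
Proof. apply inner_pos. Qed.

Lemma rip_sym {H : Hilbert} (x y : H) : rip x y = rip y x.
Proof. unfold rip. rewrite (inner_sym x y). reflexivity. Qed.

Lemma rip_add_l {H : Hilbert} (x y z : H) : rip (vadd x y) z = rip x z + rip y z.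
Proof. unfold rip. rewrite inner_add_l. reflexivity. Qed.
Lemma rip_add_r {H : Hilbert} (x y z : H) : rip z (vadd x y) = rip z x + rip z y.
Proof. unfold rip. rewrite inner_add_r. reflexivity. Qed.
Lemma rip_scal_l {H : Hilbert} r (x y : H) : rip (vscal (RtoC r) x) y = r * rip x y.
Proof. unfold rip. rewrite inner_scal_l. simpl. ring. Qed.
Lemma rip_scal_r {H : Hilbert} r (x y : H) : rip y (vscal (RtoC r) x) = r * rip y x.
Proof. unfold rip. rewrite inner_scal_r. simpl. ring. Qed.
Lemma rip_opp_l {H : Hilbert} (x y : H) : rip (vopp x) y = - rip x y.
Proof. rewrite vopp_scal, rip_scal_l. ring. Qed.
Lemma rip_opp_r {H : Hilbert} (x y : H) : rip y (vopp x) = - rip y x.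
Proof. rewrite vopp_scal, rip_scal_r. ring. Qed.

Lemma rip_Ci_r {H : Hilbert} (x y : H) : rip x (vscal Ci y) = Im (inner x y).
Proof. unfold rip. rewrite inner_scal_r. simpl. ring. Qed.

Lemma nsq_add {H : Hilbert} (x y : H) : nsq (vadd x y) = nsq x + 2 * rip x y + nsq y.
Proof. unfold nsq. fold (rip (vadd x y) (vadd x y)) (rip x x) (rip y y).
  rewrite rip_add_l, !rip_add_r, (rip_sym y x). ring. Qed.
Lemma nsq_sub {H : Hilbert} (x y : H) : nsq (vsub x y) = nsq x - 2 * rip x y + nsq y.
Proof.
  unfold vsub. rewrite nsq_add, rip_opp_r. unfold nsq.
  fold (rip (vopp y) (vopp y)) (rip y y). rewrite rip_opp_l, rip_opp_r. ring.
Qed.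
Lemma nsq_scal {H : Hilbert} r (x : H) : nsq (vscal (RtoC r) x) = r * r * nsq x.
Proof. unfold nsq. fold (rip (vscal (RtoC r) x) (vscal (RtoC r) x)) (rip x x).
  rewrite rip_scal_l, rip_scal_r. ring. Qed.
Lemma nsq_opp {H : Hilbert} (x : H) : nsq (vopp x) = nsq x.
Proof. rewrite vopp_scal, nsq_scal. ring. Qed.
Lemma nsq_zero {H : Hilbert} : nsq (@vzero H) = 0.
Proof. unfold nsq. rewrite inner_0_l. reflexivity. Qed.

Lemma nsq_eq0 {H : Hilbert} (x : H) : nsq x = 0 -> x = vzero.
Proof. intros E. apply inner_def, C_ext; simpl. exact E. apply inner_self_im. Qed.

Lemma nsq_scalC {H : Hilbert} (a : C) (x : H) :
  nsq (vscal a x) = (Re a * Re a + Im a * Im a) * nsq x.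
Proof.
  unfold nsq. rewrite inner_scal_l, inner_scal_r. pose proof (inner_self_im x).
  destruct (inner x x) as [u v]; destruct a as [a1 a2]; simpl in *. subst v. ring.
Qed.

Lemma quad_discriminant (a b K : R) : 0 <= a -> 0 <= b -> 0 <= K ->
  (forall t, 0 <= a - 2 * t * K + t * t * K * b) -> K <= a * b.
Proof.
  intros Ha Hb HK Ht.
  destruct (Req_dec K 0) as [->|HK0]. nra.
  destruct (Req_dec b 0) as [->|Hb0].
  - specialize (Ht ((a + 1) / K)). exfalso.
    replace (a - 2 * ((a + 1) / K) * K + (a + 1) / K * ((a + 1) / K) * K * 0) with (- a - 2)
      in Ht by (field; lra).
    lra.
  - specialize (Ht (/ b)).
    replace (a - 2 * / b * K + / b * / b * K * b) with (a - K / b) in Ht by (field; lra).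
    assert (Hkb : K / b <= a) by lra.
    apply (Rmult_le_compat_r b) in Hkb; [|lra]. unfold Rdiv in Hkb.
    rewrite Rmult_assoc, Rinv_l in Hkb; lra.
Qed.

Definition form_ok {H : Hilbert} (f : H -> H -> C) : Prop :=
  (forall x y z, f (vadd x y) z = Cadd (f x z) (f y z)) /\
  (forall a x y, f (vscal a x) y = Cmul a (f x y)) /\
  (forall x y, f y x = Cconj (f x y)) /\
  (forall x, 0 <= Re (f x x)).

(* Cauchy-Schwarz for semidefinite forms (needed both for <.,.> and for <A.,.>, A >= 0):
   expand f(x + mu y, x + mu y) >= 0 with mu = - t f(x,y). *)
Lemma form_CS {H : Hilbert} (f : H -> H -> C) (x y : H) : form_ok f ->
  Re (f x y) * Re (f x y) + Im (f x y) * Im (f x y) <= Re (f x x) * Re (f y y).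
Proof.
  intros [Fadd [Fscal [Fsym Fpos]]].
  assert (Fadd_r : forall x y z, f z (vadd x y) = Cadd (f z x) (f z y)).
  { intros. rewrite Fsym, Fadd, Cconj_add, <- !Fsym. reflexivity. }
  assert (Fscal_r : forall a x y, f y (vscal a x) = Cmul (Cconj a) (f y x)).
  { intros. rewrite Fsym, Fscal, Cconj_mul, <- Fsym. reflexivity. }
  assert (Him : Im (f y y) = 0).
  { pose proof (Fsym y y) as E. destruct (f y y) as [a b]. unfold Cconj in E; simpl in *.
    injection E; intros; lra. }
  apply quad_discriminant; try apply Fpos; try nra.
  intros t. pose proof (Fpos (vadd x (vscal (mkC (- t * Re (f x y)) (- t * Im (f x y))) y))) as P.
  rewrite Fadd, !Fadd_r, !Fscal, !Fscal_r, (Fsym x y) in P.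
  destruct (f x y) as [c1 c2]. destruct (f x x) as [a1 a2]. destruct (f y y) as [b1 b2].
  simpl in *. subst b2. nra.
Qed.

Lemma inner_form_ok {H : Hilbert} : form_ok (@inner H).
Proof.
  repeat split; intros; [apply inner_add_l|apply inner_scal_l|apply inner_sym|apply inner_pos].
Qed.

Lemma CS_inner {H : Hilbert} (x y : H) :
  Re (inner x y) * Re (inner x y) + Im (inner x y) * Im (inner x y) <= nsq x * nsq y.
Proof. apply form_CS, inner_form_ok. Qed.

Lemma abs_le_of_sq (r s : R) : 0 <= s -> r * r <= s * s -> Rabs r <= s.
Proof. intros Hs Hr. unfold Rabs; destruct (Rcase_abs r); nra. Qed.

Lemma abs_le_inv (r s : R) : Rabs r <= s -> - s <= r <= s.
Proof. unfold Rabs; destruct (Rcase_abs r); intros; lra. Qed.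

Lemma norm_sq {H : Hilbert} (x : H) : norm x * norm x = nsq x.
Proof. unfold norm. apply sqrt_sqrt, inner_pos. Qed.
Lemma norm_nonneg {H : Hilbert} (x : H) : 0 <= norm x.
Proof. apply sqrt_pos. Qed.
Lemma norm_zero {H : Hilbert} : norm (@vzero H) = 0.
Proof. unfold norm. fold (nsq (@vzero H)). rewrite nsq_zero. apply sqrt_0. Qed.

Lemma norm_le_of_sq {H : Hilbert} (x : H) r : 0 <= r -> nsq x <= r * r -> norm x <= r.
Proof. intros Hr Hx. pose proof (norm_nonneg x). pose proof (norm_sq x). nra. Qed.

Lemma rip_le_norm {H : Hilbert} (x y : H) : Rabs (rip x y) <= norm x * norm y.
Proof.
  pose proof (CS_inner x y) as CS. rewrite <- !norm_sq in CS.
  pose proof (norm_nonneg x). pose proof (norm_nonneg y). pose proof (Rle_0_sqr (Im (inner x y))).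
  unfold rip, Rsqr in *. apply abs_le_of_sq; nra.
Qed.

Lemma Im_le_norm {H : Hilbert} (x y : H) : Rabs (Im (inner x y)) <= norm x * norm y.
Proof.
  pose proof (CS_inner x y) as CS. rewrite <- !norm_sq in CS.
  pose proof (norm_nonneg x). pose proof (norm_nonneg y). pose proof (Rle_0_sqr (Re (inner x y))).
  unfold Rsqr in *. apply abs_le_of_sq; nra.
Qed.

Lemma Cabs_inner_le {H : Hilbert} (x y : H) : Cabs (inner x y) <= norm x * norm y.
Proof.
  unfold Cabs. pose proof (CS_inner x y) as CS. rewrite <- !norm_sq in CS.
  pose proof (norm_nonneg x); pose proof (norm_nonneg y).
  rewrite <- (sqrt_Rsqr (norm x * norm y)) by nra. apply sqrt_le_1_alt. unfold Rsqr. nra.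
Qed.

Lemma norm_triangle {H : Hilbert} (x y : H) : norm (vadd x y) <= norm x + norm y.
Proof.
  apply norm_le_of_sq. pose proof (norm_nonneg x); pose proof (norm_nonneg y); lra.
  rewrite nsq_add, <- !norm_sq. pose proof (abs_le_inv _ _ (rip_le_norm x y)). nra.
Qed.

Lemma norm_scalC {H : Hilbert} (a : C) (x : H) : norm (vscal a x) = Cabs a * norm x.
Proof.
  unfold norm. fold (nsq (vscal a x)) (nsq x). rewrite nsq_scalC. unfold Cabs.
  apply sqrt_mult_alt. nra.
Qed.

Lemma norm_scal {H : Hilbert} (r : R) (x : H) : norm (vscal (RtoC r) x) = Rabs r * norm x.
Proof.
  rewrite norm_scalC. unfold Cabs. simpl. f_equal. rewrite Rmult_0_l, Rplus_0_r, <- Rsqr_def.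
  apply sqrt_Rsqr_abs.
Qed.

Lemma norm_opp {H : Hilbert} (x : H) : norm (vopp x) = norm x.
Proof. unfold norm. fold (nsq (vopp x)) (nsq x). rewrite nsq_opp. reflexivity. Qed.

Lemma norm_eq0 {H : Hilbert} (x : H) : norm x = 0 -> x = vzero.
Proof. intros E. apply nsq_eq0. rewrite <- norm_sq, E. ring. Qed.

Lemma norm_sub_sym {H : Hilbert} (x y : H) : norm (vsub x y) = norm (vsub y x).
Proof. unfold vsub. rewrite <- norm_opp, vopp_add, vopp_opp, vadd_comm. reflexivity. Qed.

Lemma vsub_triangle {H : Hilbert} (x y w : H) :
  norm (vsub x w) <= norm (vsub x y) + norm (vsub y w).
Proof.
  replace (vsub x w) with (vadd (vsub x y) (vsub y w)) by veq. apply norm_triangle.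
Qed.

Lemma parallelogram {H : Hilbert} (a b : H) :
  nsq (vadd a b) + nsq (vsub a b) = 2 * nsq a + 2 * nsq b.
Proof. rewrite nsq_add, nsq_sub. ring. Qed.

(** * 2. Limits, the projection theorem and Riesz' theorem *)

Lemma lin_opp {H : Hilbert} (T : op H) x : linear_op T -> T (vopp x) = vopp (T x).
Proof. intros [_ Ts]. rewrite !vopp_scal, Ts. reflexivity. Qed.
Lemma lin_sub {H : Hilbert} (T : op H) x y : linear_op T -> T (vsub x y) = vsub (T x) (T y).
Proof. intros L. unfold vsub. rewrite (proj1 L), lin_opp; auto. Qed.
Lemma lin_zero {H : Hilbert} (T : op H) : linear_op T -> T vzero = vzero.
Proof. intros [_ Ts]. rewrite <- (vscal_C0 vzero) at 1. rewrite Ts, vscal_C0. reflexivity. Qed.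

Lemma bounded_bound {H : Hilbert} (T : op H) :
  bounded_op T -> exists M, 0 < M /\ forall x, norm (T x) <= M * norm x.
Proof.
  intros [_ [M HM]]. exists (Rabs M + 1). split. pose proof (Rabs_pos M); lra.
  intros x. specialize (HM x). pose proof (norm_nonneg x). pose proof (Rle_abs M). nra.
Qed.

Lemma conv_unique {H : Hilbert} (u : nat -> H) l l' : converges u l -> converges u l' -> l = l'.
Proof.
  intros C1 C2. apply vsub_eq0, norm_eq0.
  destruct (Rle_lt_dec (norm (vsub l l')) 0) as [Hle|Hlt].
  { pose proof (norm_nonneg (vsub l l')); lra. }
  exfalso. set (e := norm (vsub l l') / 2).
  destruct (C1 e) as [N1 HN1]. unfold e; lra. destruct (C2 e) as [N2 HN2]. unfold e; lra.
  specialize (HN1 (max N1 N2) ltac:(lia)). specialize (HN2 (max N1 N2) ltac:(lia)).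
  pose proof (vsub_triangle l (u (max N1 N2)) l'). fold (vsub (u (max N1 N2)) l) in HN1.
  fold (vsub (u (max N1 N2)) l') in HN2. rewrite norm_sub_sym in HN1. unfold e in *. lra.
Qed.

Lemma conv_add {H : Hilbert} (u v : nat -> H) l m :
  converges u l -> converges v m -> converges (fun n => vadd (u n) (v n)) (vadd l m).
Proof.
  intros C1 C2 eps He. destruct (C1 (eps/2)) as [N1 HN1]. lra.
  destruct (C2 (eps/2)) as [N2 HN2]. lra.
  exists (max N1 N2). intros n Hn. specialize (HN1 n ltac:(lia)). specialize (HN2 n ltac:(lia)).
  fold (vsub (vadd (u n) (v n)) (vadd l m)).
  replace (vsub (vadd (u n) (v n)) (vadd l m)) with (vadd (vsub (u n) l) (vsub (v n) m)) by veq.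
  pose proof (norm_triangle (vsub (u n) l) (vsub (v n) m)). unfold vsub in *. lra.
Qed.

Lemma conv_scal {H : Hilbert} (a : C) (u : nat -> H) l :
  converges u l -> converges (fun n => vscal a (u n)) (vscal a l).
Proof.
  intros C1 eps He. pose proof (Cabs_nonneg a).
  destruct (C1 (eps / (Cabs a + 1))) as [N HN]. apply Rdiv_lt_0_compat; lra.
  exists N. intros n Hn. specialize (HN n Hn).
  rewrite <- vscal_opp, <- vscal_distr_v, norm_scalC.
  pose proof (norm_nonneg (vadd (u n) (vopp l))).
  apply (Rmult_lt_compat_l (Cabs a + 1)) in HN; [|lra].
  replace ((Cabs a + 1) * (eps / (Cabs a + 1))) with eps in HN by (field; lra). nra.
Qed.

Lemma conv_const {H : Hilbert} (l : H) : converges (fun _ => l) l.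
Proof. intros eps He. exists 0%nat. intros. fold (vsub l l). rewrite vsub_self, norm_zero. lra. Qed.

Lemma conv_ext {H : Hilbert} (u v : nat -> H) l :
  (forall n, u n = v n) -> converges u l -> converges v l.
Proof.
  intros E C1 eps He. destruct (C1 eps He) as [N HN]. exists N. intros n Hn. rewrite <- E. auto.
Qed.

Lemma conv_op {H : Hilbert} (T : op H) (u : nat -> H) l :
  bounded_op T -> converges u l -> converges (fun n => T (u n)) (T l).
Proof.
  intros Tb C1. destruct (bounded_bound T Tb) as [M [HM Hb]]. intros eps He.
  destruct (C1 (eps / M)) as [N HN]. apply Rdiv_lt_0_compat; lra. exists N. intros n Hn.
  fold (vsub (T (u n)) (T l)). rewrite <- lin_sub by apply Tb. specialize (HN n Hn).
  eapply Rle_lt_trans. apply Hb. fold (vsub (u n) l) in HN.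
  apply (Rmult_lt_compat_l M) in HN; [|lra].
  replace (M * (eps / M)) with eps in HN by (field; lra). lra.
Qed.

Definition cauchy {H : Hilbert} (u : nat -> H) : Prop :=
  forall eps, eps > 0 -> exists N, forall n m, (n >= N)%nat -> (m >= N)%nat ->
    norm (vsub (u n) (u m)) < eps.

Lemma cauchy_conv {H : Hilbert} (u : nat -> H) : cauchy u -> exists l, converges u l.
Proof. intros Cu. exact (complete u Cu). Qed.

Lemma conv_cauchy {H : Hilbert} (u : nat -> H) l : converges u l -> cauchy u.
Proof.
  intros C1 eps He. destruct (C1 (eps/2)) as [N HN]. lra. exists N. intros n m Hn Hm.
  pose proof (vsub_triangle (u n) l (u m)). specialize (HN n Hn) as A. specialize (HN m Hm) as B.
  fold (vsub (u n) l) in A. fold (vsub (u m) l) in B. rewrite norm_sub_sym in B. lra.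
Qed.

Lemma conv_norm_le {H : Hilbert} (u v : nat -> H) l m : converges u l -> converges v m ->
  (forall n, norm (u n) <= norm (v n)) -> norm l <= norm m.
Proof.
  intros Cu Cv Hle. apply Rnot_lt_le. intros Hlt. set (e := (norm l - norm m) / 2).
  destruct (Cu e) as [N1 HN1]. unfold e; lra. destruct (Cv e) as [N2 HN2]. unfold e; lra.
  set (n := max N1 N2). specialize (HN1 n ltac:(unfold n; lia)). specialize (HN2 n ltac:(unfold n; lia)).
  fold (vsub (u n) l) in HN1. fold (vsub (v n) m) in HN2.
  pose proof (vsub_triangle l (u n) vzero) as T1. pose proof (vsub_triangle (v n) m vzero) as T2.
  unfold vsub in T1, T2. rewrite vopp_zero, !vadd_0r in T1, T2.
  fold (vsub l (u n)) in T1. fold (vsub (v n) m) in T2.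
  rewrite norm_sub_sym in T1. specialize (Hle n). unfold e in *. lra.
Qed.

Lemma conv_inner_l {H : Hilbert} (u : nat -> H) l y : converges u l ->
  forall eps, eps > 0 -> exists N, forall n, (n >= N)%nat ->
   Rabs (Re (inner (u n) y) - Re (inner l y)) < eps /\
   Rabs (Im (inner (u n) y) - Im (inner l y)) < eps.
Proof.
  intros C1 eps He. pose proof (norm_nonneg y).
  destruct (C1 (eps / (norm y + 1))) as [N HN]. apply Rdiv_lt_0_compat; lra.
  exists N. intros n Hn. specialize (HN n Hn).
  pose proof (norm_nonneg (vadd (u n) (vopp l))).
  assert (Hk : norm (vadd (u n) (vopp l)) * norm y < eps).
  { apply (Rmult_lt_compat_l (norm y + 1)) in HN; [|lra].
    replace ((norm y + 1) * (eps / (norm y + 1))) with eps in HN by (field; lra). nra. }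
  pose proof (rip_le_norm (vadd (u n) (vopp l)) y). pose proof (Im_le_norm (vadd (u n) (vopp l)) y).
  unfold rip in *. rewrite inner_add_l, inner_opp_l in *. simpl in *.
  split; [replace (Re (inner (u n) y) - Re (inner l y))
            with (Re (inner (u n) y) + (-1 * Re (inner l y) - 0 * Im (inner l y))) by ring
         |replace (Im (inner (u n) y) - Im (inner l y))
            with (Im (inner (u n) y) + (-1 * Im (inner l y) + 0 * Re (inner l y))) by ring]; lra.
Qed.

Lemma inner_lim2 {H : Hilbert} (u v : nat -> H) l m x y : converges u l -> converges v m ->
  (forall n, inner (u n) y = inner x (v n)) -> inner l y = inner x m.
Proof.
  intros Cu Cv E.
  pose proof (conv_inner_l v m x Cv) as Cv'. pose proof (conv_inner_l u l y Cu) as Cu'.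
  rewrite (inner_sym m x). apply C_ext; apply Rle_antisym; apply Rle_plus_epsilon; intros eps He;
  destruct (Cu' (eps/2)) as [N1 HN1]; try lra; destruct (Cv' (eps/2)) as [N2 HN2]; try lra;
  destruct (HN1 (max N1 N2)) as [A1 A2]; try lia; destruct (HN2 (max N1 N2)) as [B1 B2]; try lia;
  rewrite E, (inner_sym (v _) x) in A1, A2; simpl in *;
  apply Rabs_def2 in A1; apply Rabs_def2 in A2; apply Rabs_def2 in B1; apply Rabs_def2 in B2; lra.
Qed.

Lemma small_inv (g : R) : g > 0 -> exists N : nat, forall n, (n >= N)%nat -> / (INR n + 1) < g.
Proof.
  intros Hg. destruct (archimed (/ g)) as [A _]. pose proof (Rinv_0_lt_compat g Hg).
  exists (Z.to_nat (up (/ g))). intros n Hn.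
  apply le_INR in Hn. rewrite INR_IZR_INZ, Z2Nat.id in Hn by (apply le_IZR; lra).
  assert (Hx : INR n + 1 > / g) by lra.
  apply Rinv_lt_contravar in Hx. rewrite Rinv_inv in Hx. exact Hx.
  apply Rmult_lt_0_compat; lra.
Qed.

Lemma fun_choice {A B : Type} (P : A -> B -> Prop) :
  (forall a, exists b, P a b) -> exists f : A -> B, forall a, P a (f a).
Proof.
  intros h. exists (fun a => proj1_sig (constructive_indefinite_description _ (h a))).
  intros a. apply proj2_sig.
Qed.

Lemma seq_of_dense {H : Hilbert} (D : H -> Prop) (y : H) :
  (forall eps, eps > 0 -> exists x, D x /\ norm (vsub x y) < eps) ->
  exists u : nat -> H, (forall n, D (u n)) /\ converges u y.
Proof.
  intros Hd.
  assert (Hn : forall n : nat, exists x, D x /\ norm (vsub x y) < / (INR n + 1)).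
  { intros n. apply Hd, Rinv_0_lt_compat. pose proof (pos_INR n); lra. }
  destruct (fun_choice _ Hn) as [u Hu]. exists u. split. intros n; apply Hu.
  intros eps He. destruct (small_inv eps He) as [N HN]. exists N. intros n Hn'.
  specialize (HN n Hn'). destruct (Hu n) as [_ Hu']. fold (vsub (u n) y). lra.
Qed.

Lemma closed_zero {H : Hilbert} (M : H -> Prop) : closed_subspace M -> M vzero.
Proof. intros [A _]; exact A. Qed.
Lemma closed_add {H : Hilbert} (M : H -> Prop) x y : closed_subspace M -> M x -> M y -> M (vadd x y).
Proof. intros [_ [A _]]; apply A. Qed.
Lemma closed_scal {H : Hilbert} (M : H -> Prop) a x : closed_subspace M -> M x -> M (vscal a x).
Proof. intros [_ [_ [A _]]]; apply A. Qed.
Lemma closed_lim {H : Hilbert} (M : H -> Prop) u l :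
  closed_subspace M -> (forall n, M (u n)) -> converges u l -> M l.
Proof. intros [_ [_ [_ A]]]; apply A. Qed.

Lemma quad_zero (r w : R) : 0 <= w -> (forall t, 0 <= -2 * t * r + t * t * w) -> r = 0.
Proof.
  intros Hw Ht. specialize (Ht (r / (w + 1))).
  replace (-2 * (r / (w + 1)) * r + r / (w + 1) * (r / (w + 1)) * w)
    with (r * r * (- w - 2) / ((w + 1) * (w + 1))) in Ht by (field; lra).
  assert (Hpos : 0 < (w + 1) * (w + 1)) by nra.
  apply (Rmult_le_compat_r ((w + 1) * (w + 1))) in Ht; [|lra].
  unfold Rdiv in Ht. rewrite Rmult_assoc, Rinv_l, Rmult_1_r, Rmult_0_l in Ht by lra. nra.
Qed.

Lemma norm_le_close {H : Hilbert} (x y : H) : norm y <= norm x + norm (vsub x y).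
Proof.
  pose proof (vsub_triangle y x vzero) as T. unfold vsub in T at 1 3.
  rewrite vopp_zero, !vadd_0r, norm_sub_sym in T. lra.
Qed.

Lemma nsq_infimum {H : Hilbert} (M : H -> Prop) (y : H) : M vzero ->
  exists d, (forall m, M m -> d <= nsq (vsub y m)) /\
            (forall eps, eps > 0 -> exists m, M m /\ nsq (vsub y m) < d + eps).
Proof.
  intros M0. set (E := fun r => exists m, M m /\ r = - nsq (vsub y m)).
  assert (Eb : bound E).
  { exists 0. intros r [m [_ ->]]. pose proof (nsq_nonneg (vsub y m)); lra. }
  destruct (completeness E Eb (ex_intro _ _ (ex_intro _ vzero (conj M0 eq_refl))))
    as [L [HL1 HL2]].
  exists (- L). split.
  - intros m Hm. assert (HE : E (- nsq (vsub y m))) by (exists m; auto). specialize (HL1 _ HE). lra.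
  - intros eps He. apply NNPP. intros Hn.
    assert (Hub : is_upper_bound E (L - eps)).
    { intros r [m [Hm ->]]. apply Rnot_lt_le. intros Hlt. apply Hn. exists m. split; auto. lra. }
    specialize (HL2 _ Hub). lra.
Qed.

(* a minimizing sequence is Cauchy, by the parallelogram law *)
Lemma minimizing_cauchy {H : Hilbert} (M : H -> Prop) (y : H) (d : R) (u : nat -> H) :
  closed_subspace M -> (forall m, M m -> d <= nsq (vsub y m)) ->
  (forall n, M (u n) /\ nsq (vsub y (u n)) < d + / (INR n + 1)) -> cauchy u.
Proof.
  intros CM Hd Hu eps He. destruct (small_inv (eps * eps / 4)) as [N HN]. nra.
  exists N. intros n k Hn Hk.
  destruct (Hu n) as [Mn Hn']. destruct (Hu k) as [Mk Hk'].
  pose proof (parallelogram (vsub y (u n)) (vsub y (u k))) as Pg.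
  replace (vadd (vsub y (u n)) (vsub y (u k)))
    with (vscal (RtoC 2) (vsub y (vscal (RtoC (/2)) (vadd (u n) (u k))))) in Pg by veq.
  replace (vsub (vsub y (u n)) (vsub y (u k))) with (vopp (vsub (u n) (u k))) in Pg by veq.
  rewrite nsq_scal, nsq_opp in Pg.
  assert (Mmid : M (vscal (RtoC (/ 2)) (vadd (u n) (u k))))
    by (apply closed_scal; auto; apply closed_add; auto).
  specialize (Hd _ Mmid). specialize (HN n Hn) as A. specialize (HN k Hk) as B.
  pose proof (norm_sq (vsub (u n) (u k))). pose proof (norm_nonneg (vsub (u n) (u k))). nra.
Qed.

Lemma limit_nsq_le {H : Hilbert} (u : nat -> H) l d : converges u l ->
  (forall n, nsq (u n) < d + / (INR n + 1)) -> nsq l <= d.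
Proof.
  intros Cu Hu. apply Rnot_lt_le. intros Hlt. set (g := nsq l - d). set (a := norm l).
  assert (Ha0 : 0 <= a) by apply norm_nonneg.
  set (delta := Rmin 1 (g / (4 * (2 * a + 3)))).
  assert (Hg : 0 < g / (4 * (2 * a + 3))) by (apply Rdiv_lt_0_compat; unfold a, g in *; lra).
  assert (Hd1 : delta <= 1) by apply Rmin_l.
  assert (Hd2 : delta <= g / (4 * (2 * a + 3))) by apply Rmin_r.
  assert (Hd0 : 0 < delta) by (apply Rmin_glb_lt; lra).
  assert (Hd3 : delta * (2 * a + 3) <= g / 4).
  { apply (Rmult_le_compat_r (2 * a + 3)) in Hd2; [|lra].
    replace (g / (4 * (2 * a + 3)) * (2 * a + 3)) with (g / 4) in Hd2 by (field; lra). lra. }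
  destruct (Cu delta Hd0) as [N1 HN1]. destruct (small_inv (g / 2)) as [N2 HN2]. unfold g; lra.
  set (n := max N1 N2). specialize (HN1 n ltac:(unfold n; lia)). specialize (HN2 n ltac:(unfold n; lia)).
  specialize (Hu n). fold (vsub (u n) l) in HN1.
  set (b := norm (u n)).
  assert (Hab : a < b + delta) by (pose proof (norm_le_close (u n) l); unfold a, b in *; lra).
  assert (Hba : b < a + delta)
    by (pose proof (norm_le_close l (u n)) as T; rewrite (norm_sub_sym l) in T; unfold a, b in *; lra).
  assert (Hbb : b * b < d + g / 2) by (unfold b; rewrite norm_sq; unfold g in *; lra).
  assert (Haa : a * a = d + g). { unfold a. rewrite norm_sq. unfold g. ring. }
  assert (Hb0 : 0 <= b) by apply norm_nonneg.
  assert (Hsq : a * a < (b + delta) * (b + delta)) by nra.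
  assert (Hmid : 2 * b * delta + delta * delta <= delta * (2 * a + 3)) by nra.
  nra.
Qed.

Lemma minimizer_orthogonal {H : Hilbert} (M : H -> Prop) (y m : H) :
  closed_subspace M -> M m -> (forall w, M w -> nsq (vsub y m) <= nsq (vsub y w)) ->
  forall w, M w -> inner (vsub y m) w = C0.
Proof.
  intros CM Mm Hmin.
  assert (Hre : forall w, M w -> rip (vsub y m) w = 0).
  { intros w Hw. apply (quad_zero _ (nsq w)). apply nsq_nonneg. intros t.
    assert (Mw : M (vadd m (vscal (RtoC t) w))) by (apply closed_add, closed_scal; auto).
    specialize (Hmin _ Mw).
    replace (vsub y (vadd m (vscal (RtoC t) w))) with (vsub (vsub y m) (vscal (RtoC t) w)) in Hmin
      by veq.
    rewrite (nsq_sub (vsub y m)), nsq_scal, rip_scal_r in Hmin. lra. }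
  intros w Hw. apply C_ext.
  - apply Hre; auto.
  - simpl. rewrite <- rip_Ci_r. apply Hre, closed_scal; auto.
Qed.

Lemma projection {H : Hilbert} (M : H -> Prop) (y : H) : closed_subspace M ->
  exists m, M m /\ forall w, M w -> inner (vsub y m) w = C0.
Proof.
  intros CM. destruct (nsq_infimum M y (closed_zero M CM)) as [d [Hd1 Hd2]].
  assert (Hseq : forall n : nat, exists m, M m /\ nsq (vsub y m) < d + / (INR n + 1)).
  { intros n. apply Hd2, Rinv_0_lt_compat. pose proof (pos_INR n); lra. }
  destruct (fun_choice _ Hseq) as [u Hu].
  destruct (cauchy_conv _ (minimizing_cauchy M y d u CM Hd1 Hu)) as [m Hm].
  assert (HMm : M m) by (apply (closed_lim M u); auto; intros n; apply Hu).
  exists m. split; auto. apply minimizer_orthogonal; auto.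
  intros w Hw. apply Rle_trans with d; auto.
  apply (limit_nsq_le (fun n => vsub y (u n))). 2: intros n; apply Hu.
  unfold vsub. rewrite vopp_scal. eapply conv_ext.
  2: apply (conv_add _ _ _ _ (conv_const y) (conv_scal (RtoC (-1)) _ _ Hm)).
  intros n. simpl. rewrite vopp_scal. reflexivity.
Qed.

Definition bfun {H : Hilbert} (phi : H -> C) : Prop :=
  (forall x y, phi (vadd x y) = Cadd (phi x) (phi y)) /\
  (forall a x, phi (vscal a x) = Cmul a (phi x)) /\
  exists K, forall x, Cabs (phi x) <= K * norm x.

Lemma bfun_kernel_closed {H : Hilbert} (phi : H -> C) :
  bfun phi -> closed_subspace (fun x => phi x = C0).
Proof.
  intros [Pa [Ps [K HK]]].
  assert (Pop : forall x, phi (vopp x) = Cmul (RtoC (-1)) (phi x))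
    by (intros; rewrite vopp_scal, Ps; auto).
  repeat split.
  - rewrite <- (vscal_C0 vzero), Ps. Ceq.
  - intros x y Hx Hy. rewrite Pa, Hx, Hy. Ceq.
  - intros a x Hx. rewrite Ps, Hx. Ceq.
  - intros u l Hu Hl. apply Cabs_zero, Rle_antisym; [|apply Cabs_nonneg].
    apply Rnot_lt_le. intros Hlt. pose proof (Rabs_pos K). pose proof (Rle_abs K).
    destruct (Hl (Cabs (phi l) / (Rabs K + 1))) as [N HN]. apply Rdiv_lt_0_compat; lra.
    specialize (HN N (le_n _)). specialize (HK (vadd (u N) (vopp l))).
    rewrite Pa, Pop, Hu in HK.
    replace (Cabs (Cadd C0 (Cmul (RtoC (-1)) (phi l)))) with (Cabs (phi l)) in HK
      by (unfold Cabs; f_equal; simpl; ring).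
    pose proof (norm_nonneg (vadd (u N) (vopp l))).
    apply (Rmult_lt_compat_l (Rabs K + 1)) in HN; [|lra].
    replace ((Rabs K + 1) * (Cabs (phi l) / (Rabs K + 1))) with (Cabs (phi l)) in HN by (field; lra).
    nra.
Qed.

(* Riesz: a bounded functional is phi = <., v>.  If phi <> 0, take r <> 0 orthogonal to
   ker phi; then x - (phi x / phi r) r lies in ker phi, and v is a multiple of r. *)
Lemma riesz {H : Hilbert} (phi : H -> C) : bfun phi -> exists v, forall x, phi x = inner x v.
Proof.
  intros Bphi. pose proof (bfun_kernel_closed phi Bphi) as CM. destruct Bphi as [Pa [Ps _]].
  destruct (classic (forall x, phi x = C0)) as [Hall|Hex].
  { exists vzero. intros x. rewrite Hall, inner_0_r. auto. }
  apply not_all_ex_not in Hex. destruct Hex as [x0 Hx0].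
  destruct (projection _ x0 CM) as [m [Mm Hm]].
  set (r := vsub x0 m).
  assert (Pr : phi r = phi x0) by (unfold r, vsub; rewrite vopp_scal, Pa, Ps, Mm; Ceq).
  assert (Hnr : nsq r > 0).
  { pose proof (nsq_nonneg r). destruct (Req_dec (nsq r) 0) as [E|E]; [|lra].
    exfalso. apply Hx0. rewrite <- Pr, (nsq_eq0 r E), <- (vscal_C0 vzero), Ps. Ceq. }
  exists (vscal (Cmul (Cconj (phi r)) (RtoC (/ nsq r))) r).
  intros x. set (c := Cmul (phi x) (Cinv (phi r))).
  assert (Mx : phi (vsub x (vscal c r)) = C0).
  { unfold vsub. rewrite vopp_scal, Pa, !Ps. unfold c. rewrite Pr.
    rewrite (Cmul_inv_cancel _ _ Hx0). Ceq. }
  specialize (Hm _ Mx). fold r in Hm.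
  assert (E1 : inner x r = Cmul c (RtoC (nsq r))).
  { rewrite inner_sym. unfold vsub in Hm. rewrite inner_add_r, inner_opp_r, inner_scal_r in Hm.
    pose proof (inner_self_im r). unfold nsq.
    destruct (inner r x), c, (inner r r); simpl in *. injection Hm; intros. Ceq; nra. }
  rewrite inner_scal_r, E1. rewrite <- Pr in Hx0. unfold c.
  rewrite <- (Cmul_inv_cancel (phi x) (phi r) Hx0) at 1.
  destruct (Cmul (phi x) (Cinv (phi r))), (phi r). Ceq; field; lra.
Qed.

(** * 3. Bounded operators and adjoints *)

Definition adj_rel {H : Hilbert} (T S : op H) : Prop := forall x y, inner (T x) y = inner x (S y).

Lemma adj_rel_unique {H : Hilbert} (T S S' : op H) : adj_rel T S -> adj_rel T S' -> S = S'.
Proof. intros A B. extensionality y. apply inner_ext_l. intros x. rewrite <- A, <- B. reflexivity. Qed.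

Lemma adj_rel_sym {H : Hilbert} (T S : op H) : adj_rel T S -> adj_rel S T.
Proof. intros A x y. rewrite inner_sym, <- A, <- inner_sym. reflexivity. Qed.

Lemma adj_rel_linear {H : Hilbert} (T S : op H) : adj_rel T S -> linear_op S.
Proof.
  intros A. split.
  - intros x y. apply inner_ext_l. intros z. rewrite <- A, !inner_add_r, <- !A. reflexivity.
  - intros a x. apply inner_ext_l. intros z. rewrite <- A, !inner_scal_r, <- !A. reflexivity.
Qed.

Lemma adj_rel_bounded {H : Hilbert} (T S : op H) : bounded_op T -> adj_rel T S -> bounded_op S.
Proof.
  intros Tb A. split. eapply adj_rel_linear; eauto.
  destruct (bounded_bound T Tb) as [M [HM Hb]]. exists M. intros y.
  assert (E : nsq (S y) = rip (T (S y)) y) by (unfold rip; rewrite A; reflexivity).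
  pose proof (abs_le_inv _ _ (rip_le_norm (T (S y)) y)) as CS. rewrite <- E, <- norm_sq in CS.
  pose proof (Hb (S y)). pose proof (norm_nonneg (S y)). pose proof (norm_nonneg y).
  pose proof (norm_nonneg (T (S y))).
  destruct (Req_dec (norm (S y)) 0) as [->|Hne]. nra.
  apply (Rmult_le_reg_l (norm (S y))). lra. nra.
Qed.

(* bounded operators have adjoints, by Riesz' theorem applied to x |-> <T x, y> *)
Lemma bounded_adjoint_exists {H : Hilbert} (T : op H) : bounded_op T -> exists S, adj_rel T S.
Proof.
  intros Tb. destruct (bounded_bound T Tb) as [M [HM Hb]].
  assert (Hy : forall y, exists v, forall x, inner (T x) y = inner x v).
  { intros y. apply riesz. split; [|split].
    - intros. rewrite (proj1 (proj1 Tb)), inner_add_l. auto.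
    - intros. rewrite (proj2 (proj1 Tb)), inner_scal_l. auto.
    - exists (M * norm y). intros x. eapply Rle_trans. apply Cabs_inner_le.
      pose proof (Hb x). pose proof (norm_nonneg y). nra. }
  destruct (fun_choice _ Hy) as [S HS]. exists S. intros x y. apply HS.
Qed.

Lemma adjoint_eq {H : Hilbert} (T S : op H) : adj_rel T S -> adjoint T = S.
Proof.
  intros A. apply (adj_rel_unique T); auto. unfold adjoint, adj_rel.
  apply (epsilon_spec (inhabits T) (fun S => forall x y, inner (T x) y = inner x (S y))).
  exists S; exact A.
Qed.

Lemma adjoint_rel {H : Hilbert} (T : op H) : bounded_op T -> adj_rel T (adjoint T).
Proof.
  intros Tb. destruct (bounded_adjoint_exists T Tb) as [S HS]. rewrite (adjoint_eq T S HS). exact HS.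
Qed.

Lemma adjoint_bounded {H : Hilbert} (T : op H) : bounded_op T -> bounded_op (adjoint T).
Proof. intros Tb. eapply adj_rel_bounded; eauto. apply adjoint_rel; auto. Qed.

Lemma adjoint_adjoint {H : Hilbert} (T : op H) : bounded_op T -> adjoint (adjoint T) = T.
Proof. intros Tb. apply adjoint_eq, adj_rel_sym, adjoint_rel; auto. Qed.

Lemma adj_rel_comp {H : Hilbert} (T S T' S' : op H) : adj_rel T T' -> adj_rel S S' ->
  adj_rel (ocomp T S) (ocomp S' T').
Proof. intros A B x y. unfold ocomp. rewrite A, B. reflexivity. Qed.
Lemma adj_rel_id {H : Hilbert} : adj_rel (fun x : H => x) (fun x => x).
Proof. intros x y; auto. Qed.
Lemma adj_rel_add {H : Hilbert} (T S T' S' : op H) : adj_rel T T' -> adj_rel S S' ->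
  adj_rel (fun x => vadd (T x) (S x)) (fun x => vadd (T' x) (S' x)).
Proof. intros A B x y. rewrite inner_add_l, inner_add_r, A, B. auto. Qed.
Lemma adj_rel_scal {H : Hilbert} (a : C) (T T' : op H) : adj_rel T T' ->
  adj_rel (fun x => vscal a (T x)) (fun x => vscal (Cconj a) (T' x)).
Proof. intros A x y. rewrite inner_scal_l, inner_scal_r, Cconj_conj, A. auto. Qed.
Lemma adj_rel_rscal {H : Hilbert} (r : R) (T : op H) : adj_rel T T ->
  adj_rel (fun x => vscal (RtoC r) (T x)) (fun x => vscal (RtoC r) (T x)).
Proof. intros A. pose proof (adj_rel_scal (RtoC r) T T A) as E. rewrite Cconj_RtoC in E. exact E. Qed.

Lemma bounded_comp {H : Hilbert} (T S : op H) : bounded_op T -> bounded_op S -> bounded_op (ocomp T S).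
Proof.
  intros Tb Sb. destruct (bounded_bound T Tb) as [M1 [HM1 Hb1]].
  destruct (bounded_bound S Sb) as [M2 [HM2 Hb2]].
  split. split; intros; unfold ocomp; rewrite ?(proj1 (proj1 Sb)), ?(proj1 (proj1 Tb)),
    ?(proj2 (proj1 Sb)), ?(proj2 (proj1 Tb)); auto.
  exists (M1 * M2). intros x. unfold ocomp. eapply Rle_trans. apply Hb1. specialize (Hb2 x). nra.
Qed.

Lemma bounded_id {H : Hilbert} : bounded_op (fun x : H => x).
Proof. split. split; auto. exists 1. intros; lra. Qed.

Lemma bounded_zero {H : Hilbert} : bounded_op (fun _ : H => vzero).
Proof.
  split. split; intros. rewrite vadd_0; auto. rewrite vscal_0; auto.
  exists 0. intros. rewrite norm_zero. pose proof (norm_nonneg x). lra.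
Qed.

Lemma bounded_add {H : Hilbert} (T S : op H) : bounded_op T -> bounded_op S ->
  bounded_op (fun x => vadd (T x) (S x)).
Proof.
  intros Tb Sb. destruct (bounded_bound T Tb) as [M1 [HM1 Hb1]].
  destruct (bounded_bound S Sb) as [M2 [HM2 Hb2]].
  split. split; intros.
  - rewrite (proj1 (proj1 Sb)), (proj1 (proj1 Tb)). veq.
  - rewrite (proj2 (proj1 Sb)), (proj2 (proj1 Tb)), vscal_distr_v. auto.
  - exists (M1 + M2). intros x. eapply Rle_trans. apply norm_triangle.
    specialize (Hb1 x). specialize (Hb2 x). lra.
Qed.

Lemma bounded_scal {H : Hilbert} (a : C) (T : op H) : bounded_op T ->
  bounded_op (fun x => vscal a (T x)).
Proof.
  intros Tb. destruct (bounded_bound T Tb) as [M1 [HM1 Hb1]].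
  split. split; intros.
  - rewrite (proj1 (proj1 Tb)), vscal_distr_v. auto.
  - rewrite (proj2 (proj1 Tb)), !vscal_assoc. f_equal. Ceq.
  - exists (Cabs a * M1). intros x. rewrite norm_scalC. specialize (Hb1 x).
    pose proof (Cabs_nonneg a). nra.
Qed.

Lemma bounded_sub {H : Hilbert} (T S : op H) : bounded_op T -> bounded_op S ->
  bounded_op (fun x => vsub (T x) (S x)).
Proof.
  intros Tb Sb. unfold vsub. replace (fun x => vadd (T x) (vopp (S x)))
    with (fun x => vadd (T x) (vscal (RtoC (-1)) (S x))).
  apply bounded_add, bounded_scal; auto.
  extensionality x. rewrite vopp_scal. reflexivity.
Qed.

(** * 4. The positive square root *)

Fixpoint rsum (f : nat -> R) (n : nat) : R :=
  match n with O => 0 | S m => rsum f m + f m end.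

Lemma rsum_S f n : rsum f (S n) = rsum f n + f n. Proof. reflexivity. Qed.
Lemma rsum_ext f g n : (forall k, (k < n)%nat -> f k = g k) -> rsum f n = rsum g n.
Proof.
  induction n; simpl; intros Hfg; auto.
  rewrite IHn by (intros; apply Hfg; lia). rewrite Hfg by lia. auto.
Qed.
Lemma rsum_shift f n : rsum f (S n) = f O + rsum (fun j => f (S j)) n.
Proof. induction n. simpl. ring. remember (S n) as m. simpl. rewrite IHn. subst. simpl. ring. Qed.
Lemma rsum_add f g n : rsum (fun k => f k + g k) n = rsum f n + rsum g n.
Proof. induction n; simpl; [ring|rewrite IHn; ring]. Qed.
Lemma rsum_scal a f n : rsum (fun k => a * f k) n = a * rsum f n.
Proof. induction n; simpl; [ring|rewrite IHn; ring]. Qed.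
Lemma rsum_le f g n : (forall k, (k < n)%nat -> f k <= g k) -> rsum f n <= rsum g n.
Proof.
  induction n; simpl; intros Hfg; [lra|].
  pose proof (Hfg n ltac:(lia)). pose proof (IHn ltac:(intros; apply Hfg; lia)). lra.
Qed.
Lemma rsum_nonneg f n : (forall k, (k < n)%nat -> 0 <= f k) -> 0 <= rsum f n.
Proof.
  intros Hf. apply Rle_trans with (rsum (fun _ => 0) n).
  - clear Hf. induction n; simpl; lra.
  - apply rsum_le; auto.
Qed.
Lemma rsum_mono f n m : (n <= m)%nat -> (forall k, 0 <= f k) -> rsum f n <= rsum f m.
Proof. intros Hnm Hf. induction Hnm; [lra|]. simpl. pose proof (Hf m). lra. Qed.

(* The coefficients c_n of f(t) = 1 - sqrt(1 - t) = sum c_n t^n are characterised by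
   f^2 = 2 f - t: c_0 = 0, c_1 = 1/2 and 2 c_(m+1) = sum_(j<m) c_(j+1) c_(m-j) for m >= 1.
   They are computed by course-of-values recursion: row n of the table lists c_0 .. c_n,
   and coef_next m c computes c_(m+1) from c_0 .. c_m. *)
Definition coef_next (m : nat) (c : nat -> R) : R :=
  match m with O => / 2 | _ => / 2 * rsum (fun j => c (S j) * c (m - j)%nat) m end.

Fixpoint coef_table (n : nat) : nat -> R :=
  match n with
  | O => fun _ => 0
  | S m => fun k => if (k <=? m)%nat then coef_table m k else coef_next m (coef_table m)
  end.

Definition coef (n : nat) : R := coef_table n n.

Lemma coef_table_stable n k : (k <= n)%nat -> coef_table n k = coef k.
Proof.
  induction n; intros Hk. { inversion Hk; subst. reflexivity. }
  destruct (Nat.eq_dec k (S n)) as [->|Hne]. reflexivity.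
  simpl. replace (k <=? n)%nat with true by (symmetry; apply Nat.leb_le; lia). apply IHn. lia.
Qed.

Lemma coef_0 : coef 0 = 0. Proof. reflexivity. Qed.
Lemma coef_1 : coef 1 = / 2. Proof. reflexivity. Qed.
Lemma coef_S m : (m >= 1)%nat ->
  coef (S m) = / 2 * rsum (fun j => coef (S j) * coef (m - j)) m.
Proof.
  intros Hm. unfold coef at 1.
  change (coef_table (S m) (S m))
    with (if (S m <=? m)%nat then coef_table m (S m) else coef_next m (coef_table m)).
  replace (S m <=? m)%nat with false by (symmetry; apply Nat.leb_gt; lia).
  destruct m as [|m']. lia. unfold coef_next. f_equal. apply rsum_ext. intros k Hk.
  rewrite !coef_table_stable by lia. reflexivity.
Qed.

Lemma coef_nonneg n : 0 <= coef n.
Proof.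
  induction n as [n IH] using lt_wf_ind. destruct n. rewrite coef_0; lra.
  destruct n. rewrite coef_1; lra.
  rewrite coef_S by lia. apply Rmult_le_pos. lra. apply rsum_nonneg. intros k Hk.
  apply Rmult_le_pos; apply IH; lia.
Qed.

Definition psum (n : nat) : R := rsum coef (S n).
(* coefficients of f^2; f^2 = 2 f - t says cauchy_prod (m+1) = 2 c_(m+1) for m >= 1 *)
Definition cauchy_prod (n : nat) : R := rsum (fun k => coef k * coef (n - k)) (S n).

Lemma cauchy_prod_S m : (m >= 1)%nat -> cauchy_prod (S m) = 2 * coef (S m).
Proof.
  intros Hm. unfold cauchy_prod. rewrite rsum_shift. simpl (rsum _ (S _)).
  rewrite coef_0, Nat.sub_diag, coef_0. rewrite coef_S by auto.
  replace (rsum (fun j => coef (S j) * coef (m - j)) m)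
    with (rsum (fun j : nat => coef (S j) * coef (S m - S j)) m) by (apply rsum_ext; auto).
  field.
Qed.

(* mixed sums Q_N = sum_(k <= N) c_k s_(N-k); the squaring identity gives Q_N = 2 s_N - 1,
   while s_N s_(N-1) >= Q_N >= s_M s_K for M + K = N *)
Definition mixed (N : nat) : R := rsum (fun k => coef k * psum (N - k)) (S N).

Lemma psum_S n : psum (S n) = psum n + coef (S n). Proof. reflexivity. Qed.
Lemma psum_0 : psum 0 = 0. Proof. unfold psum. simpl. rewrite coef_0. ring. Qed.

Lemma mixed_S N : mixed (S N) = mixed N + cauchy_prod (S N).
Proof.
  unfold mixed, cauchy_prod. rewrite (rsum_S _ (S N)). rewrite Nat.sub_diag, psum_0.
  assert (E : rsum (fun k => coef k * psum (S N - k)) (S N)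
              = rsum (fun k => coef k * psum (N - k) + coef k * coef (S N - k)) (S N)).
  { apply rsum_ext. intros k Hk. replace (S N - k)%nat with (S (N - k)) by lia.
    rewrite psum_S. ring. }
  rewrite E, rsum_add. rewrite (rsum_S _ (S N)).
  rewrite Nat.sub_diag, coef_0. ring.
Qed.

Lemma mixed_id N : (N >= 1)%nat -> mixed N = 2 * psum N - 1.
Proof.
  induction N; intros HN. lia.
  destruct N.
  - unfold mixed. simpl. rewrite psum_0. unfold psum. simpl. rewrite coef_0, coef_1. field.
  - rewrite mixed_S, IHN, cauchy_prod_S by lia. rewrite (psum_S (S N)). ring.
Qed.

Lemma psum_nonneg n : 0 <= psum n.
Proof. apply rsum_nonneg. intros; apply coef_nonneg. Qed.
Lemma psum_mono n m : (n <= m)%nat -> psum n <= psum m.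
Proof. intros. apply rsum_mono. lia. apply coef_nonneg. Qed.

Lemma mixed_upper N : mixed N <= psum N * psum (pred N).
Proof.
  unfold mixed. unfold psum at 2. rewrite Rmult_comm, <- rsum_scal.
  apply rsum_le. intros k Hk. destruct k. rewrite coef_0. lra.
  rewrite (Rmult_comm (psum (pred N))). apply Rmult_le_compat_l. apply coef_nonneg.
  apply psum_mono. lia.
Qed.

(* s_N <= 1, from s_N s_(N-1) >= 2 s_N - 1 by induction *)
Lemma psum_le_1 n : psum n <= 1.
Proof.
  induction n. rewrite psum_0; lra.
  pose proof (mixed_upper (S n)) as Hup. rewrite mixed_id in Hup by lia. simpl in Hup.
  pose proof (psum_nonneg (S n)). nra.
Qed.

Lemma mixed_lower M K : psum M * psum K <= mixed (M + K).
Proof.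
  unfold mixed. unfold psum at 1. rewrite Rmult_comm, <- rsum_scal.
  apply Rle_trans with (rsum (fun k => coef k * psum (M + K - k)) (S M)).
  - apply rsum_le. intros k Hk. rewrite Rmult_comm. apply Rmult_le_compat_l.
    apply coef_nonneg. apply psum_mono. lia.
  - apply rsum_mono. lia. intros k. apply Rmult_le_pos. apply coef_nonneg. apply psum_nonneg.
Qed.

Lemma seq_sup (s : nat -> R) (K : R) : (forall n, s n <= K) ->
  exists L, (forall n, s n <= L) /\ forall d, d > 0 -> exists n, L - d < s n.
Proof.
  intros HK. set (E := fun r => exists n, r = s n).
  assert (Eb : bound E) by (exists K; intros r [n ->]; apply HK).
  destruct (completeness E Eb (ex_intro _ (s 0%nat) (ex_intro _ 0%nat eq_refl))) as [L [HL1 HL2]].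
  exists L. split. { intros n. apply HL1. exists n; auto. }
  intros d Hd. apply NNPP. intros Hn.
  assert (Hub : is_upper_bound E (L - d)).
  { intros r [n ->]. apply Rnot_lt_le. intros Hlt. apply Hn. exists n. auto. }
  specialize (HL2 _ Hub). lra.
Qed.

(* s_N is nondecreasing and bounded by 1; its supremum L satisfies L^2 <= 2 L - 1 (from
   s_n s_n <= Q_(2n) = 2 s_(2n) - 1), i.e. L = 1.  So s_N -> 1: the binomial series of
   1 - sqrt(1 - t) converges at t = 1 *)
Lemma psum_to_1 eps : eps > 0 -> exists N, forall n, (n >= N)%nat -> 1 - psum n < eps.
Proof.
  intros He. destruct (seq_sup psum 1 psum_le_1) as [L [HsL Happ]].
  assert (HL : L = 1).
  { apply Rle_antisym. { apply Rnot_lt_le. intros Hlt. destruct (Happ (L - 1)) as [n Hn]; [lra|].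
      pose proof (psum_le_1 n). lra. }
    apply Rnot_lt_le. intros HLlt.
    assert (Hhalf : psum 1 = / 2) by (unfold psum; simpl; rewrite coef_0, coef_1; ring).
    pose proof (HsL 1%nat) as H1. rewrite Hhalf in H1.
    set (d := (1 - L) * (1 - L) / 4).
    destruct (Happ d) as [n Hn]. unfold d; nra.
    pose proof (mixed_lower n n) as Hlow. pose proof (HsL (n + n)%nat).
    destruct (Nat.eq_dec n 0) as [->|Hz].
    - rewrite psum_0 in Hn. unfold d in Hn. nra.
    - rewrite mixed_id in Hlow by lia.
      assert (Hpos : L - d > 0) by (unfold d; nra).
      assert (Hsq : (L - d) * (L - d) < psum n * psum n) by nra.
      assert (Hsq' : (L - d) * (L - d) < 2 * L - 1) by lra.
      assert (Hd : 0 <= d) by (unfold d; nra).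
      assert (HLd : L * d <= d) by nra.
      assert (Hfin : (1 - L) * (1 - L) < 2 * d) by nra.
      unfold d in Hfin. nra. }
  subst L. destruct (Happ eps He) as [N HN]. exists N. intros n Hn.
  pose proof (psum_mono N n Hn). lra.
Qed.

Fixpoint vsum {H : Hilbert} (f : nat -> H) (n : nat) : H :=
  match n with O => vzero | S m => vadd (vsum f m) (f m) end.

Lemma vsum_S {H : Hilbert} (f : nat -> H) n : vsum f (S n) = vadd (vsum f n) (f n).
Proof. reflexivity. Qed.

Lemma vsum_ext {H : Hilbert} (f g : nat -> H) n :
  (forall k, (k < n)%nat -> f k = g k) -> vsum f n = vsum g n.
Proof.
  induction n; simpl; intros Hfg; auto.
  rewrite IHn by (intros; apply Hfg; lia). rewrite Hfg by lia. auto.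
Qed.

Lemma vsum_add {H : Hilbert} (f g : nat -> H) n :
  vsum (fun k => vadd (f k) (g k)) n = vadd (vsum f n) (vsum g n).
Proof. induction n; simpl. rewrite vadd_0; auto. rewrite IHn. veq. Qed.

Lemma vsum_sub {H : Hilbert} (f g : nat -> H) n :
  vsum (fun k => vsub (f k) (g k)) n = vsub (vsum f n) (vsum g n).
Proof. induction n; simpl. veq. rewrite IHn. veq. Qed.

Lemma vsum_lin {H : Hilbert} (T : op H) (f : nat -> H) n :
  linear_op T -> T (vsum f n) = vsum (fun k => T (f k)) n.
Proof. intros L. induction n; simpl. apply lin_zero; auto. rewrite (proj1 L), IHn. auto. Qed.

Lemma vsum_scal_const {H : Hilbert} (a : nat -> R) (v : H) n :
  vsum (fun k => vscal (RtoC (a k)) v) n = vscal (RtoC (rsum a n)) v.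
Proof.
  induction n; simpl. rewrite RtoC_0, vscal_C0; auto.
  rewrite IHn, <- vscal_distr_c, Cadd_RtoC. auto.
Qed.

Lemma vsum_norm {H : Hilbert} (f : nat -> H) n : norm (vsum f n) <= rsum (fun k => norm (f k)) n.
Proof. induction n; simpl. rewrite norm_zero; lra. eapply Rle_trans. apply norm_triangle. lra. Qed.

Fixpoint opow {H : Hilbert} (B : op H) (n : nat) (x : H) : H :=
  match n with O => x | S m => B (opow B m x) end.

Lemma opow_add {H : Hilbert} (B : op H) k m x : opow B k (opow B m x) = opow B (k + m) x.
Proof. induction k; simpl; auto. rewrite IHk. auto. Qed.

Lemma opow_inter {H : Hilbert} (B B' X : op H) n x :
  (forall y, X (B y) = B' (X y)) -> X (opow B n x) = opow B' n (X x).
Proof. intros E. induction n; simpl; auto. rewrite E, IHn. auto. Qed.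

(* For a contraction B, the partial sums T_N = sum_(k <= N) c_k B^k of the series of
   1 - sqrt(1 - B) converge strongly to an operator S(B); for linear B one has
   S(B)^2 = 2 S(B) - B, and S(B) is self-adjoint when B is. *)
Definition partial {H : Hilbert} (B : op H) (N : nat) (x : H) : H :=
  vsum (fun k => vscal (RtoC (coef k)) (opow B k x)) (S N).

Definition series {H : Hilbert} (B : op H) (x : H) : H :=
  epsilon (inhabits x) (fun l => converges (fun N => partial B N x) l).

Lemma psum_tail_small (r eps : R) : 0 <= r -> eps > 0 ->
  exists N, forall n, (n >= N)%nat -> (1 - psum n) * r < eps.
Proof.
  intros Hr He. assert (Hpos : eps / (r + 1) > 0) by (apply Rdiv_lt_0_compat; lra).
  destruct (psum_to_1 _ Hpos) as [N HN]. exists N. intros n Hn. specialize (HN n Hn).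
  pose proof (psum_le_1 n).
  apply Rle_lt_trans with (eps / (r + 1) * r). apply Rmult_le_compat_r; lra.
  replace eps with (eps / (r + 1) * (r + 1)) at 2 by (field; lra). nra.
Qed.

Section BinomialSeries.
Context {H : Hilbert} (B : op H) (B_lin : linear_op B) (B_contr : forall y, norm (B y) <= norm y).

Lemma opow_lin n : linear_op (opow B n).
Proof.
  induction n; simpl. split; auto.
  split; intros. rewrite (proj1 IHn), (proj1 B_lin). auto. rewrite (proj2 IHn), (proj2 B_lin). auto.
Qed.

Lemma opow_contr n x : norm (opow B n x) <= norm x.
Proof. induction n; simpl. lra. eapply Rle_trans. apply B_contr. auto. Qed.

Lemma partial_S N x :
  partial B (S N) x = vadd (partial B N x) (vscal (RtoC (coef (S N))) (opow B (S N) x)).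
Proof. reflexivity. Qed.

Lemma partial_0 x : partial B 0 x = vzero.
Proof. unfold partial. simpl. rewrite coef_0, RtoC_0, vscal_C0, vadd_0. auto. Qed.

Lemma partial_lin N : linear_op (partial B N).
Proof.
  unfold partial. split; intros.
  - rewrite <- vsum_add. apply vsum_ext. intros k _.
    rewrite (proj1 (opow_lin k)), vscal_distr_v. auto.
  - rewrite vsum_lin. apply vsum_ext. intros k _.
    rewrite (proj2 (opow_lin k)), !vscal_assoc. f_equal. Ceq.
    split; intros. apply vscal_distr_v. rewrite !vscal_assoc. f_equal. Ceq.
Qed.

Lemma partial_norm N x : norm (partial B N x) <= psum N * norm x.
Proof.
  unfold partial, psum. eapply Rle_trans. apply vsum_norm.
  rewrite Rmult_comm, <- rsum_scal. apply rsum_le. intros k _.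
  rewrite norm_scal, Rabs_pos_eq by apply coef_nonneg. rewrite (Rmult_comm (norm x)).
  apply Rmult_le_compat_l. apply coef_nonneg. apply opow_contr.
Qed.

Lemma partial_diff N M x : (N <= M)%nat ->
  norm (vsub (partial B M x) (partial B N x)) <= (psum M - psum N) * norm x.
Proof.
  intros HNM. induction HNM.
  { rewrite vsub_self, norm_zero, Rminus_diag, Rmult_0_l. lra. }
  rewrite partial_S.
  replace (vsub (vadd (partial B m x) (vscal (RtoC (coef (S m))) (opow B (S m) x))) (partial B N x))
    with (vadd (vsub (partial B m x) (partial B N x)) (vscal (RtoC (coef (S m))) (opow B (S m) x)))
    by veq.
  eapply Rle_trans. apply norm_triangle. rewrite norm_scal, Rabs_pos_eq by apply coef_nonneg.
  pose proof (opow_contr (S m) x). pose proof (coef_nonneg (S m)). rewrite psum_S. nra.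
Qed.

(* (T_N x) is Cauchy since s_N converges *)
Lemma partial_cauchy x : cauchy (fun N => partial B N x).
Proof.
  intros eps He. destruct (psum_tail_small (norm x) eps (norm_nonneg x) He) as [N HN].
  exists N.
  assert (Hab : forall a b, (N <= a)%nat -> (a <= b)%nat ->
            norm (vsub (partial B b x) (partial B a x)) < eps).
  { intros a b Ha Hab. eapply Rle_lt_trans. apply partial_diff; auto.
    pose proof (HN a Ha). pose proof (psum_le_1 b). pose proof (norm_nonneg x).
    apply Rle_lt_trans with ((1 - psum a) * norm x); auto. apply Rmult_le_compat_r; lra. }
  intros n m Hn Hm. destruct (le_ge_dec n m).
  - rewrite norm_sub_sym. apply Hab; lia.
  - apply Hab; lia.
Qed.

Lemma series_spec x : converges (fun N => partial B N x) (series B x).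
Proof.
  unfold series. apply (epsilon_spec (inhabits x) (fun l => converges (fun N => partial B N x) l)).
  apply cauchy_conv, partial_cauchy.
Qed.

Lemma series_unique x l : converges (fun N => partial B N x) l -> series B x = l.
Proof. intros C1. eapply conv_unique. apply series_spec. auto. Qed.

Lemma series_lin : linear_op (series B).
Proof.
  split; intros.
  - apply series_unique. eapply conv_ext. 2: apply conv_add; apply series_spec.
    intros n. simpl. rewrite (proj1 (partial_lin n)). auto.
  - apply series_unique. eapply conv_ext. 2: apply conv_scal; apply series_spec.
    intros n. simpl. rewrite (proj2 (partial_lin n)). auto.
Qed.

Lemma series_norm x : norm (series B x) <= norm x.
Proof.
  apply (conv_norm_le _ (fun _ => x) _ _ (series_spec x) (conv_const x)).
  intros n. eapply Rle_trans. apply partial_norm. pose proof (psum_le_1 n).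
  pose proof (psum_nonneg n). pose proof (norm_nonneg x). nra.
Qed.

Lemma series_bounded : bounded_op (series B).
Proof. split. apply series_lin. exists 1. intros. rewrite Rmult_1_l. apply series_norm. Qed.

(* S(B) is self-adjoint when B is, as a limit of polynomials in B *)
Lemma series_selfadj : adj_rel B B -> adj_rel (series B) (series B).
Proof.
  intros A x y. apply (inner_lim2 (fun N => partial B N x) (fun N => partial B N y));
    try apply series_spec.
  intros n. unfold partial.
  assert (Hp : forall k x y, inner (opow B k x) y = inner x (opow B k y)).
  { induction k; simpl; intros. reflexivity.
    rewrite A, IHk, (opow_inter B B B k _ (fun _ => eq_refl)). reflexivity. }
  induction (S n); simpl. rewrite inner_0_l, inner_0_r; auto.
  rewrite inner_add_l, inner_add_r, IHn0, inner_scal_l, inner_scal_r, Cconj_RtoC, Hp. auto.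
Qed.

(* Squaring the partial sums: T_N^2 x = sum_k c_k B^k T_N x, and the truncated identity
   sum_k c_k B^k T_(N-k) = 2 T_N - B of f^2 = 2 f - t bounds the error
   |T_N^2 x - (2 T_N x - B x)| by (1 - s_N)^2 |x|. *)
Definition square_aux (N : nat) (x : H) : H :=
  vsum (fun k => vscal (RtoC (coef k)) (opow B k (partial B (N - k) x))) (S N).

Lemma square_aux_S N x :
  square_aux (S N) x = vadd (square_aux N x) (vscal (RtoC (cauchy_prod (S N))) (opow B (S N) x)).
Proof.
  unfold square_aux. rewrite (vsum_S _ (S N)).
  rewrite Nat.sub_diag, partial_0, (lin_zero _ (opow_lin _)), vscal_0, vadd_0r.
  unfold cauchy_prod. rewrite (rsum_S _ (S N)), Nat.sub_diag, coef_0, Rmult_0_r, Rplus_0_r.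
  rewrite <- vsum_scal_const, <- vsum_add. apply vsum_ext. intros k Hk.
  replace (S N - k)%nat with (S (N - k)) by lia. rewrite partial_S.
  rewrite (proj1 (opow_lin k)), (proj2 (opow_lin k)), opow_add.
  replace (k + S (N - k))%nat with (S N) by lia. rewrite vscal_distr_v, vscal_assoc, Cmul_RtoC. auto.
Qed.

Lemma square_aux_id N x : (N >= 1)%nat -> vadd (square_aux N x) (B x) = vscal (RtoC 2) (partial B N x).
Proof.
  intros HN. induction N. lia. destruct N.
  - unfold square_aux. rewrite !vsum_S. simpl vsum.
    replace (1 - 0)%nat with 1%nat by lia. replace (1 - 1)%nat with 0%nat by lia.
    rewrite partial_0. simpl opow. rewrite (lin_zero _ B_lin). unfold partial.
    rewrite !vsum_S. simpl vsum. simpl opow. rewrite coef_0, coef_1. veq.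
  - rewrite square_aux_S, cauchy_prod_S by lia.
    set (t := vscal (RtoC (2 * coef (S (S N)))) (opow B (S (S N)) x)).
    replace (vadd (vadd (square_aux (S N) x) t) (B x)) with (vadd (vadd (square_aux (S N) x) (B x)) t)
      by veq.
    rewrite IHN by lia. unfold t. rewrite (partial_S (S N)). veq.
Qed.

Lemma partial_square N x : (N >= 1)%nat ->
  vsub (partial B N (partial B N x)) (vsub (vscal (RtoC 2) (partial B N x)) (B x)) =
  vsum (fun k => vscal (RtoC (coef k)) (opow B k (vsub (partial B N x) (partial B (N - k) x)))) (S N).
Proof.
  intros HN. rewrite <- square_aux_id by auto.
  replace (vsub (vadd (square_aux N x) (B x)) (B x)) with (square_aux N x) by veq.
  unfold square_aux. unfold partial at 1. rewrite <- vsum_sub. apply vsum_ext. intros k _.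
  rewrite (lin_sub _ _ _ (opow_lin k)). veq.
Qed.

Lemma partial_square_error N x : (N >= 1)%nat ->
  norm (vsub (partial B N (partial B N x)) (vsub (vscal (RtoC 2) (partial B N x)) (B x)))
    <= (1 - psum N) * (1 - psum N) * norm x.
Proof.
  intros HN. rewrite partial_square by auto. eapply Rle_trans. apply vsum_norm.
  apply Rle_trans with (rsum (fun k => coef k * ((psum N - psum (N - k)) * norm x)) (S N)).
  { apply rsum_le. intros k Hk. rewrite norm_scal, Rabs_pos_eq by apply coef_nonneg.
    apply Rmult_le_compat_l. apply coef_nonneg. eapply Rle_trans. apply opow_contr.
    apply partial_diff. lia. }
  replace (rsum (fun k => coef k * ((psum N - psum (N - k)) * norm x)) (S N))
    with (rsum (fun k => (psum N * norm x) * coef k + (- norm x) * (coef k * psum (N - k))) (S N))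
    by (apply rsum_ext; intros; ring).
  rewrite rsum_add, !rsum_scal. fold (psum N) (mixed N). rewrite mixed_id by auto. right. ring.
Qed.

Lemma partial_diag_conv x : converges (fun N => partial B N (partial B N x)) (series B (series B x)).
Proof.
  intros eps He. set (y := series B x).
  destruct (series_spec x (eps/2)) as [N1 HN1]. lra.
  destruct (series_spec y (eps/2)) as [N2 HN2]. lra.
  exists (max N1 N2). intros n Hn.
  fold (vsub (partial B n (partial B n x)) (series B y)).
  replace (vsub (partial B n (partial B n x)) (series B y))
    with (vadd (partial B n (vsub (partial B n x) y)) (vsub (partial B n y) (series B y)))
    by (rewrite (lin_sub _ _ _ (partial_lin n)); veq).
  eapply Rle_lt_trans. apply norm_triangle.
  specialize (HN1 n ltac:(lia)). specialize (HN2 n ltac:(lia)).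
  pose proof (partial_norm n (vsub (partial B n x) y)). pose proof (psum_le_1 n).
  pose proof (psum_nonneg n). pose proof (norm_nonneg (vsub (partial B n x) y)).
  fold y (vsub (partial B n x) y) in HN1. fold (vsub (partial B n y) (series B y)) in HN2. nra.
Qed.

(* the operator identity S(B)^2 = 2 S(B) - B, i.e. (1 - S(B))^2 = 1 - B *)
Lemma series_square x : series B (series B x) = vsub (vscal (RtoC 2) (series B x)) (B x).
Proof.
  assert (Cerr : converges (fun N => vsub (partial B N (partial B N x))
                                        (vsub (vscal (RtoC 2) (partial B N x)) (B x))) vzero).
  { intros eps He. destruct (psum_tail_small (norm x) eps (norm_nonneg x) He) as [N HN].
    exists (max N 1). intros n Hn. rewrite vopp_zero, vadd_0r.
    eapply Rle_lt_trans. apply partial_square_error. lia.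
    specialize (HN n ltac:(lia)). pose proof (psum_le_1 n). pose proof (psum_nonneg n).
    pose proof (norm_nonneg x).
    assert ((1 - psum n) * (1 - psum n) <= 1 - psum n) by nra. nra. }
  assert (Clin : converges (fun N => vsub (vscal (RtoC 2) (partial B N x)) (B x))
                   (vsub (vscal (RtoC 2) (series B x)) (B x))).
  { unfold vsub. apply conv_add. apply conv_scal, series_spec. apply conv_const. }
  pose proof (conv_add _ _ _ _ Cerr Clin) as Csum. rewrite vadd_0 in Csum.
  eapply conv_unique. apply partial_diag_conv.
  eapply conv_ext. 2: exact Csum. intros n. simpl. veq.
Qed.

End BinomialSeries.

Lemma series_inter {H : Hilbert} (B B' X : op H) x :
  (forall y, norm (B y) <= norm y) -> (forall y, norm (B' y) <= norm y) -> bounded_op X ->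
  (forall y, X (B y) = B' (X y)) -> X (series B x) = series B' (X x).
Proof.
  intros Bc Bc' Xb E. symmetry. apply series_unique; auto.
  eapply conv_ext. 2: apply conv_op; [exact Xb| apply series_spec; auto].
  intros n. simpl. unfold partial. rewrite vsum_lin by apply Xb. apply vsum_ext. intros k _.
  rewrite (proj2 (proj1 Xb)), (opow_inter B B' X) by auto. auto.
Qed.

Definition pos_op {H : Hilbert} (A : op H) : Prop :=
  bounded_op A /\ adj_rel A A /\ (forall x, 0 <= Re (inner (A x) x)).

Lemma pos_op_form {H : Hilbert} (T : op H) : pos_op T -> form_ok (fun x y => inner (T x) y).
Proof.
  intros [Tb [Ts Tp]]. repeat split; auto.
  - intros. rewrite (proj1 (proj1 Tb)), inner_add_l. auto.
  - intros. rewrite (proj2 (proj1 Tb)), inner_scal_l. auto.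
  - intros. rewrite Ts, inner_sym, Ts. auto.
Qed.

(* <T y, y> = 0 forces T y = 0 for T >= 0, by Cauchy-Schwarz for the form <T., .> *)
Lemma pos_zero {H : Hilbert} (T : op H) y : pos_op T -> Re (inner (T y) y) = 0 -> T y = vzero.
Proof.
  intros P E. pose proof (form_CS _ y (T y) (pos_op_form T P)) as CS. simpl in CS.
  rewrite E, Rmult_0_l in CS. fold (nsq (T y)) in CS.
  apply nsq_eq0. pose proof (Rle_0_sqr (Im (inner (T y) (T y)))). unfold Rsqr in *. nra.
Qed.

(* For 0 <= A <= c, the operator B := 1 - A/c is a positive contraction, and
   root A c := sqrt c (1 - S(B)) is the positive square root of A. *)
Definition root_hyp {H : Hilbert} (A : op H) (c : R) : Prop :=
  pos_op A /\ 0 < c /\ forall x, Re (inner (A x) x) <= c * nsq x.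

Definition shift {H : Hilbert} (A : op H) (c : R) : op H :=
  fun x => vsub x (vscal (RtoC (/ c)) (A x)).

Definition root {H : Hilbert} (A : op H) (c : R) : op H :=
  fun x => vscal (RtoC (sqrt c)) (vsub x (series (shift A c) x)).

Lemma shift_bounded {H : Hilbert} (A : op H) c : bounded_op A -> bounded_op (shift A c).
Proof. intros Ab. apply bounded_sub. apply bounded_id. apply bounded_scal; auto. Qed.

Lemma shift_selfadj {H : Hilbert} (A : op H) c : adj_rel A A -> adj_rel (shift A c) (shift A c).
Proof.
  intros As x y. unfold shift, vsub. rewrite inner_add_l, inner_add_r, inner_opp_l, inner_opp_r,
    inner_scal_l, inner_scal_r, As, Cconj_RtoC. auto.
Qed.

Lemma shift_form {H : Hilbert} (A : op H) c x :
  Re (inner (shift A c x) x) = nsq x - / c * Re (inner (A x) x).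
Proof. unfold shift, vsub. rewrite inner_add_l, inner_opp_l, inner_scal_l. simpl. unfold nsq. ring. Qed.

Lemma shift_pos {H : Hilbert} (A : op H) c : root_hyp A c -> pos_op (shift A c).
Proof.
  intros [[Ab [As Ap]] [Hc Hb]]. split; [|split].
  apply shift_bounded; auto. apply shift_selfadj; auto.
  intros x. rewrite shift_form. specialize (Hb x).
  apply (Rmult_le_compat_l (/ c)) in Hb. 2: left; apply Rinv_0_lt_compat; auto.
  rewrite <- Rmult_assoc, Rinv_l, Rmult_1_l in Hb by lra. lra.
Qed.

(* 0 <= B <= 1 gives |B x|^2 = <B x, B x> <= <B x, x> <= |x| |B x| by Cauchy-Schwarz for B *)
Lemma shift_contr {H : Hilbert} (A : op H) c : root_hyp A c -> forall y, norm (shift A c y) <= norm y.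
Proof.
  intros Hy x. pose proof (shift_pos A c Hy) as P. destruct Hy as [[Ab [As Ap]] [Hc Hb]].
  set (B := shift A c) in *.
  assert (Hle : forall z, Re (inner (B z) z) <= nsq z).
  { intros z. unfold B. rewrite shift_form. pose proof (Ap z). pose proof (Rinv_0_lt_compat c Hc). nra. }
  pose proof (form_CS _ x (B x) (pos_op_form _ P)) as CS. simpl in CS.
  fold (nsq (B x)) in CS. pose proof (Hle x). pose proof (Hle (B x)).
  pose proof (proj2 (proj2 P) x). pose proof (proj2 (proj2 P) (B x)).
  pose proof (nsq_nonneg (B x)). pose proof (nsq_nonneg x).
  pose proof (Rle_0_sqr (Im (inner (B x) (B x)))). unfold Rsqr in *.
  assert (nsq (B x) * nsq (B x) <= nsq x * nsq (B x)) by nra.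
  assert (Hsq : nsq (B x) <= nsq x).
  { destruct (Req_dec (nsq (B x)) 0). lra. apply (Rmult_le_reg_r (nsq (B x))); lra. }
  apply norm_le_of_sq. apply norm_nonneg. rewrite norm_sq. auto.
Qed.

(* (root A c)^2 = c (1 - S(B))^2 = c (1 - B) = A *)
Lemma root_sq {H : Hilbert} (A : op H) c x : root_hyp A c -> root A c (root A c x) = A x.
Proof.
  intros Hy. pose proof (proj1 (shift_bounded A c (proj1 (proj1 Hy)))) as L.
  pose proof (shift_contr A c Hy) as Bc. pose proof (series_lin _ L Bc) as SL.
  destruct Hy as [_ [Hc _]].
  unfold root. rewrite (proj2 SL), (lin_sub _ _ _ SL), series_square by auto.
  set (s := series (shift A c) x).
  transitivity (vscal (RtoC (sqrt c)) (vscal (RtoC (sqrt c))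
    (vsub (vsub x s) (vsub s (vsub (vscal (RtoC 2) s) (shift A c x)))))).
  { f_equal. veq. }
  rewrite vscal_assoc, Cmul_RtoC, sqrt_sqrt by lra. unfold shift.
  transitivity (vscal (RtoC c) (vscal (RtoC (/ c)) (A x))). veq.
  rewrite vscal_assoc, Cmul_RtoC, Rinv_r, RtoC_1, vscal_1 by lra. auto.
Qed.

(* root A c >= 0, as |S(B) x| <= |x| *)
Lemma root_pos {H : Hilbert} (A : op H) c : root_hyp A c -> pos_op (root A c).
Proof.
  intros Hy. pose proof (proj1 (shift_bounded A c (proj1 (proj1 Hy)))) as L.
  pose proof (shift_contr A c Hy) as Bc.
  pose proof (series_selfadj _ Bc (shift_selfadj A c (proj1 (proj2 (proj1 Hy))))) as SS.
  split; [|split].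
  - apply bounded_scal, bounded_sub. apply bounded_id. apply series_bounded; auto.
  - intros x y. unfold root, vsub. rewrite inner_scal_l, inner_scal_r, Cconj_RtoC, inner_add_l,
      inner_add_r, inner_opp_l, inner_opp_r, SS. auto.
  - intros x. unfold root, vsub.
    rewrite inner_scal_l, inner_add_l, inner_opp_l. simpl. rewrite !Rmult_0_l, !Rminus_0_r.
    pose proof (abs_le_inv _ _ (rip_le_norm (series (shift A c) x) x)) as CS. unfold rip in CS.
    pose proof (series_norm _ Bc x). pose proof (norm_nonneg x). pose proof (norm_sq x).
    pose proof (sqrt_pos c). pose proof (norm_nonneg (series (shift A c) x)). unfold nsq in *.
    apply Rmult_le_pos. auto. nra.
Qed.

Lemma root_inter {H : Hilbert} (A A' X : op H) c x :
  root_hyp A c -> root_hyp A' c -> bounded_op X -> (forall y, X (A' y) = A (X y)) ->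
  X (root A' c x) = root A c (X x).
Proof.
  intros HA HA' Xb E. unfold root.
  rewrite (proj2 (proj1 Xb)), (lin_sub _ _ _ (proj1 Xb)).
  rewrite (series_inter (shift A' c) (shift A c) X x); auto.
  - apply shift_contr; auto.
  - apply shift_contr; auto.
  - intros y. unfold shift. rewrite (lin_sub _ _ _ (proj1 Xb)), (proj2 (proj1 Xb)), E. auto.
Qed.

(* uniqueness of the positive square root: if R >= 0 and R^2 = A, then R commutes with A,
   hence with W := root A c; with D := R - W one gets (R + W) D = 0, so <R D y, D y> and
   <W D y, D y> vanish, whence R D = W D = 0 and |D y|^2 = <D^2 y, y> = 0 *)
Lemma root_unique {H : Hilbert} (A R : op H) c : root_hyp A c -> pos_op R ->
  (forall x, R (R x) = A x) -> R = root A c.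
Proof.
  intros HA PR RR. pose proof (root_pos A c HA) as PW.
  pose proof PR as [Rb [Rs Rp]]. pose proof PW as [Wb [Ws Wp]].
  assert (RW : forall y, R (root A c y) = root A c (R y)).
  { intros y. apply root_inter; auto. intros z. rewrite <- !RR. auto. }
  set (W := root A c) in *.
  assert (WW : forall y, W (W y) = A y) by (intros y; apply root_sq; auto).
  set (D := fun y => vsub (R y) (W y)).
  assert (Sum0 : forall y, vadd (R (D y)) (W (D y)) = vzero).
  { intros y. unfold D. rewrite (lin_sub _ _ _ (proj1 Rb)), (lin_sub _ _ _ (proj1 Wb)), RR, WW, RW.
    veq. }
  assert (DD : forall y, D (D y) = vzero).
  { intros y. assert (E := f_equal (fun v => Re (inner v (D y))) (Sum0 y)). simpl in E.
    rewrite inner_add_l, inner_0_l in E. simpl in E.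
    pose proof (Rp (D y)). pose proof (Wp (D y)).
    assert (E1 : R (D y) = vzero) by (apply pos_zero; [exact PR| lra]).
    assert (E2 : W (D y) = vzero) by (apply pos_zero; auto; lra).
    unfold D at 1. rewrite E1, E2. veq. }
  extensionality y. apply vsub_eq0. fold (D y). apply nsq_eq0.
  assert (E : inner (D y) (D y) = inner y (D (D y))).
  { unfold D at 1 3. unfold vsub. rewrite inner_add_l, inner_opp_l, Rs, Ws, inner_add_r, inner_opp_r.
    reflexivity. }
  unfold nsq. rewrite E, DD, inner_0_r. auto.
Qed.

Lemma pos_op_rscal {H : Hilbert} (r : R) (T : op H) : 0 <= r -> pos_op T ->
  pos_op (fun x => vscal (RtoC r) (T x)).
Proof.
  intros Hr [Tb [Ts Tp]]. split; [|split].
  - apply bounded_scal; auto.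
  - apply adj_rel_rscal; auto.
  - intros x. rewrite inner_scal_l. simpl. rewrite Rmult_0_l, Rminus_0_r.
    apply Rmult_le_pos; auto.
Qed.

Lemma pos_op_upper {H : Hilbert} (A : op H) : pos_op A ->
  exists M, 0 < M /\ forall x, Re (inner (A x) x) <= M * nsq x.
Proof.
  intros PA. destruct (bounded_bound A (proj1 PA)) as [M [HM HbM]]. exists M. split; auto.
  intros x. pose proof (abs_le_inv _ _ (rip_le_norm (A x) x)). unfold rip in *.
  rewrite <- norm_sq. pose proof (HbM x). pose proof (norm_nonneg x). pose proof (norm_nonneg (A x)).
  nra.
Qed.

Theorem pos_sqrt {H : Hilbert} (A : op H) : pos_op A ->
  exists W, pos_op W /\ (forall x, W (W x) = A x) /\
    (forall r Y, 0 < r -> bounded_op Y -> (forall x, A (Y x) = vscal (RtoC r) (Y (A x))) ->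
       forall x, W (Y x) = vscal (RtoC (sqrt r)) (Y (W x))).
Proof.
  intros PA. destruct (pos_op_upper A PA) as [M [HM HAM]].
  assert (Hyp : forall c r, M <= c -> 0 < r -> r * M <= c ->
            root_hyp (fun x => vscal (RtoC r) (A x)) c).
  { intros c r Hc Hr HrM. split; [apply pos_op_rscal; auto; lra | split; [lra|]].
    intros x. rewrite inner_scal_l. simpl. rewrite Rmult_0_l, Rminus_0_r.
    pose proof (HAM x). pose proof (nsq_nonneg x). pose proof (proj2 (proj2 PA) x).
    apply Rle_trans with (r * (M * nsq x)). apply Rmult_le_compat_l; lra. nra. }
  assert (HA : forall c, M <= c -> root_hyp A c).
  { intros c Hc. pose proof (Hyp c 1 Hc Rlt_0_1 ltac:(lra)) as Hc1.
    replace (fun x => vscal (RtoC 1) (A x)) with A in Hc1; auto.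
    extensionality x. rewrite RtoC_1, vscal_1. auto. }
  exists (root A M). pose proof (root_pos A M (HA M (Rle_refl M))) as PW.
  split; [exact PW|split; [intros x; apply root_sq, HA; lra|]].
  intros r Y Hr Yb HY x. set (c := (r + 1) * M).
  assert (Hc : M <= c) by (unfold c; nra). assert (HrM : r * M <= c) by (unfold c; nra).
  assert (Wc : root A M = root A c).
  { apply root_unique; auto. intros y. apply root_sq, HA; lra. }
  assert (Wr : (fun y => vscal (RtoC (sqrt r)) (root A M y))
               = root (fun y => vscal (RtoC r) (A y)) c).
  { apply root_unique; auto. apply pos_op_rscal; auto. apply sqrt_pos.
    intros y. rewrite (proj2 (proj1 (proj1 PW))), vscal_assoc, Cmul_RtoC, sqrt_sqrt by lra.
    rewrite root_sq by (apply HA; lra). reflexivity. }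
  transitivity (root A c (Y x)). { rewrite Wc. reflexivity. }
  rewrite <- (root_inter A (fun y => vscal (RtoC r) (A y)) Y c); auto.
  - rewrite <- Wr. apply (proj2 (proj1 Yb)).
  - intros y. rewrite (proj2 (proj1 Yb)). symmetry. apply HY.
Qed.

(** * 5. Dense range and Douglas' factorisation *)

(* An injective self-adjoint bounded operator has dense range: the closure of its range is a
   closed subspace, and a vector orthogonal to it lies in the kernel of Z. *)
Lemma dense_range {H : Hilbert} (Z : op H) : bounded_op Z -> adj_rel Z Z -> trivial_kernel Z ->
  forall y eps, eps > 0 -> exists x, norm (vsub (Z x) y) < eps.
Proof.
  intros Zb Zs Zk. pose proof (proj1 Zb) as L.
  set (M := fun y => forall eps, eps > 0 -> exists x, norm (vsub (Z x) y) < eps).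
  assert (CM : closed_subspace M).
  { unfold M; repeat split.
    - intros eps He. exists vzero. rewrite (lin_zero _ L), vsub_self, norm_zero. lra.
    - intros x y Hx Hy eps He. destruct (Hx (eps/2)) as [a Ha]. lra.
      destruct (Hy (eps/2)) as [b Hb]. lra.
      exists (vadd a b). rewrite (proj1 L).
      replace (vsub (vadd (Z a) (Z b)) (vadd x y)) with (vadd (vsub (Z a) x) (vsub (Z b) y)) by veq.
      eapply Rle_lt_trans. apply norm_triangle. lra.
    - intros a x Hx eps He. pose proof (Cabs_nonneg a).
      destruct (Hx (eps / (Cabs a + 1))) as [b Hb]. apply Rdiv_lt_0_compat; lra.
      exists (vscal a b). rewrite (proj2 L).
      replace (vsub (vscal a (Z b)) (vscal a x)) with (vscal a (vsub (Z b) x)) by veq.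
      rewrite norm_scalC. pose proof (norm_nonneg (vsub (Z b) x)).
      apply (Rmult_lt_compat_l (Cabs a + 1)) in Hb; [|lra].
      replace ((Cabs a + 1) * (eps / (Cabs a + 1))) with eps in Hb by (field; lra). nra.
    - intros u l Hu Hl eps He. destruct (Hl (eps/2)) as [N HN]. lra. specialize (HN N (le_n _)).
      destruct (Hu N (eps/2)) as [x Hx]. lra. exists x.
      eapply Rle_lt_trans. apply (vsub_triangle _ (u N)). fold (vsub (u N) l) in HN. lra. }
  intros y. destruct (projection M y CM) as [m [Mm Hm]].
  assert (Zr : Z (vsub y m) = vzero).
  { apply inner_def. rewrite Zs. apply Hm.
    intros eps He. exists (Z (vsub y m)). rewrite vsub_self, norm_zero. lra. }
  apply Zk, vsub_eq0 in Zr. subst m. exact Mm.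
Qed.

Lemma dense_seq {H : Hilbert} (Z : op H) : bounded_op Z -> adj_rel Z Z -> trivial_kernel Z ->
  forall y, exists u : nat -> H, converges (fun n => Z (u n)) y.
Proof.
  intros Zb Zs Zk y.
  destruct (seq_of_dense (fun v => exists x, v = Z x) y) as [v [Hv Cv]].
  { intros eps He. destruct (dense_range Z Zb Zs Zk y eps He) as [x Hx]. exists (Z x). eauto. }
  destruct (fun_choice _ Hv) as [u Hu]. exists u. eapply conv_ext. 2: exact Cv. intros n. auto.
Qed.

(* Z may be cancelled on the right (dense range) and on the left (injectivity) *)
Lemma cancel_right {H : Hilbert} (Z X Y : op H) : bounded_op Z -> adj_rel Z Z -> trivial_kernel Z ->
  bounded_op X -> bounded_op Y -> (forall x, X (Z x) = Y (Z x)) -> X = Y.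
Proof.
  intros Zb Zs Zk Xb Yb E. extensionality y. destruct (dense_seq Z Zb Zs Zk y) as [u Hu].
  eapply conv_unique. apply (conv_op X _ _ Xb Hu).
  eapply conv_ext. 2: apply (conv_op Y _ _ Yb Hu). intros n; simpl. auto.
Qed.

Lemma inj_lin {H : Hilbert} (Z : op H) a b : trivial_kernel Z -> linear_op Z -> Z a = Z b -> a = b.
Proof. intros Zk L E. apply vsub_eq0, Zk. rewrite (lin_sub _ _ _ L), E. apply vsub_self. Qed.

Lemma sandwich {H : Hilbert} (Z1 X Y : op H) : pos_op Z1 -> trivial_kernel Z1 ->
  bounded_op X -> bounded_op Y -> (forall x, Z1 (X (Z1 x)) = Z1 (Y (Z1 x))) -> X = Y.
Proof.
  intros [Zb [Zs _]] Zk Xb Yb E. apply (cancel_right Z1); auto.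
  intros x. apply (inj_lin Z1); auto. apply Zb.
Qed.

(* Douglas' factorisation: if |Q x| <= |Z x| with Z injective, self-adjoint and bounded, then
   Q = D Z for a bounded D, defined on the dense range of Z by D (Z x) := Q x and
   extended by continuity. *)
Definition douglas {H : Hilbert} (Z Q : op H) (y : H) : H :=
  epsilon (inhabits y)
    (fun l => forall v, converges (fun n => Z (v n)) y -> converges (fun n => Q (v n)) l).

Section Douglas.
Context {H : Hilbert} (Z Q : op H).
Hypotheses (Zb : bounded_op Z) (Zs : adj_rel Z Z) (Zk : trivial_kernel Z) (QL : linear_op Q)
  (Qle : forall x, norm (Q x) <= norm (Z x)).

Lemma douglas_spec y v : converges (fun n => Z (v n)) y ->
  converges (fun n => Q (v n)) (douglas Z Q y).
Proof.
  unfold douglas.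
  apply (epsilon_spec (inhabits y)
    (fun l => forall v, converges (fun n => Z (v n)) y -> converges (fun n => Q (v n)) l)).
  destruct (dense_seq Z Zb Zs Zk y) as [u Hu].
  assert (Cq : cauchy (fun n => Q (u n))).
  { intros eps He. destruct (conv_cauchy _ _ Hu eps He) as [N HN]. exists N. intros n m Hn Hm.
    rewrite <- (lin_sub _ _ _ QL). eapply Rle_lt_trans. apply Qle.
    rewrite (lin_sub _ _ _ (proj1 Zb)). auto. }
  destruct (cauchy_conv _ Cq) as [l Hl]. exists l. intros w Hw eps He.
  destruct (Hl (eps/3)) as [N1 HN1]. lra. destruct (Hu (eps/3)) as [N2 HN2]. lra.
  destruct (Hw (eps/3)) as [N3 HN3]. lra.
  exists (max N1 (max N2 N3)). intros n Hn.
  specialize (HN1 n ltac:(lia)). specialize (HN2 n ltac:(lia)). specialize (HN3 n ltac:(lia)).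
  fold (vsub (Q (w n)) l). fold (vsub (Q (u n)) l) in HN1.
  fold (vsub (Z (u n)) y) in HN2. fold (vsub (Z (w n)) y) in HN3.
  eapply Rle_lt_trans. apply (vsub_triangle _ (Q (u n))).
  rewrite <- (lin_sub _ _ _ QL). pose proof (Qle (vsub (w n) (u n))) as Hq.
  rewrite (lin_sub _ _ _ (proj1 Zb)) in Hq.
  pose proof (vsub_triangle (Z (w n)) y (Z (u n))) as T. rewrite (norm_sub_sym y) in T. lra.
Qed.

Lemma douglas_factor : bounded_op (douglas Z Q) /\ (forall x, douglas Z Q (Z x) = Q x).
Proof.
  pose proof (dense_seq Z Zb Zs Zk) as DS. pose proof (proj1 Zb) as ZL.
  split; [split; [split|]|].
  - intros y y'. destruct (DS y) as [u Hu]. destruct (DS y') as [u' Hu'].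
    eapply conv_unique. apply (douglas_spec _ (fun n => vadd (u n) (u' n))).
    + eapply conv_ext. 2: apply (conv_add _ _ _ _ Hu Hu'). intros; simpl. rewrite (proj1 ZL); auto.
    + eapply conv_ext. 2: apply (conv_add _ _ _ _ (douglas_spec _ _ Hu) (douglas_spec _ _ Hu')).
      intros; simpl. rewrite (proj1 QL); auto.
  - intros a y. destruct (DS y) as [u Hu].
    eapply conv_unique. apply (douglas_spec _ (fun n => vscal a (u n))).
    + eapply conv_ext. 2: apply (conv_scal a _ _ Hu). intros; simpl. rewrite (proj2 ZL); auto.
    + eapply conv_ext. 2: apply (conv_scal a _ _ (douglas_spec _ _ Hu)).
      intros; simpl. rewrite (proj2 QL); auto.
  - exists 1. intros y. destruct (DS y) as [u Hu]. rewrite Rmult_1_l.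
    apply (conv_norm_le _ _ _ _ (douglas_spec _ _ Hu) Hu). auto.
  - intros x. eapply conv_unique. apply (douglas_spec _ (fun _ => x)). apply conv_const.
    apply conv_const.
Qed.

End Douglas.

(** * 6. Identities in A(S^5_q) and their images *)

#[export] Instance aeq_Equiv {G} (rel : term G -> term G -> Prop) : Equivalence (aeq rel).
Proof. split. intros a; apply aeq_refl. intros a b; apply aeq_sym. intros a b c; apply aeq_trans. Qed.
#[export] Instance tAdd_Proper {G} rel : Proper (aeq rel ==> aeq rel ==> aeq rel) (@tAdd G).
Proof. intros a a' Ha b b' Hb. apply aeq_add; auto. Qed.
#[export] Instance tMul_Proper {G} rel : Proper (aeq rel ==> aeq rel ==> aeq rel) (@tMul G).
Proof. intros a a' Ha b b' Hb. apply aeq_mul; auto. Qed.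
#[export] Instance tScal_Proper {G} rel c : Proper (aeq rel ==> aeq rel) (@tScal G c).
Proof. intros a a' Ha. apply aeq_scal; auto. Qed.
#[export] Instance tStar_Proper {G} rel : Proper (aeq rel ==> aeq rel) (@tStar G).
Proof. intros a a' Ha. apply aeq_star; auto. Qed.

Lemma eval_bounded {G} {H : Hilbert} (Z : G -> op H) (t : term G) :
  (forall g, bounded_op (Z g)) -> bounded_op (eval Z t).
Proof.
  intros Zb. induction t; simpl.
  - apply Zb.
  - apply bounded_zero.
  - apply bounded_id.
  - apply bounded_add; auto.
  - apply (bounded_comp (eval Z t1) (eval Z t2)); auto.
  - apply bounded_scal; auto.
  - apply adjoint_bounded; auto.
Qed.

Lemma adjoint_add {H : Hilbert} (T S : op H) : bounded_op T -> bounded_op S ->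
  adjoint (fun x => vadd (T x) (S x)) = (fun x => vadd (adjoint T x) (adjoint S x)).
Proof. intros. apply adjoint_eq. apply adj_rel_add; apply adjoint_rel; auto. Qed.
Lemma adjoint_comp {H : Hilbert} (T S : op H) : bounded_op T -> bounded_op S ->
  adjoint (fun x => T (S x)) = (fun x => adjoint S (adjoint T x)).
Proof. intros. apply adjoint_eq. apply (adj_rel_comp T S); apply adjoint_rel; auto. Qed.
Lemma adjoint_scal {H : Hilbert} (a : C) (T : op H) : bounded_op T ->
  adjoint (fun x => vscal a (T x)) = (fun x => vscal (Cconj a) (adjoint T x)).
Proof. intros. apply adjoint_eq. apply adj_rel_scal; apply adjoint_rel; auto. Qed.
Lemma adjoint_id {H : Hilbert} : adjoint (fun x : H => x) = (fun x => x).
Proof. apply adjoint_eq. apply adj_rel_id. Qed.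

Lemma eval_aeq {G} {H : Hilbert} (rel : term G -> term G -> Prop) (Z : G -> op H) :
  (forall g, bounded_op (Z g)) -> (forall a b, rel a b -> eval Z a = eval Z b) ->
  forall a b, aeq rel a b -> eval Z a = eval Z b.
Proof.
  intros Zb Zr a b E. pose proof (fun t => eval_bounded Z t Zb) as EB.
  induction E; simpl; try (rewrite ?IHE, ?IHE1, ?IHE2); auto; try congruence.
  - extensionality x. apply vadd_assoc.
  - extensionality x. apply vadd_comm.
  - extensionality x. apply vadd_0.
  - extensionality x. rewrite <- vopp_scal. apply vadd_opp.
  - extensionality x. apply (proj1 (proj1 (EB a))).
  - extensionality x. apply vscal_1.
  - extensionality x. apply vscal_assoc.
  - extensionality x. apply vscal_distr_v.
  - extensionality x. apply vscal_distr_c.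
  - extensionality x. apply (proj2 (proj1 (EB a))).
  - rewrite adjoint_adjoint; auto.
  - rewrite adjoint_add; auto.
  - rewrite (adjoint_comp (eval Z a) (eval Z b)); auto.
  - rewrite adjoint_scal; auto.
  - rewrite adjoint_id; auto.
Qed.


Definition zstar (i : idx) : term idx := tStar (z i).
Definition pterm (i j : idx) : term idx := tMul (zstar i) (z j).

Lemma scal_mul_r {G} rel (a b : term G) c : aeq rel (tMul a (tScal c b)) (tScal c (tMul a b)).
Proof. apply ax_scal_mulr. Qed.
Lemma scal_mul_l {G} rel (a b : term G) c : aeq rel (tMul (tScal c a) b) (tScal c (tMul a b)).
Proof. apply ax_scal_mull. Qed.
Lemma scal_scal {G} rel (a : term G) c d : aeq rel (tScal c (tScal d a)) (tScal (Cmul c d) a).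
Proof. apply ax_scal_assoc. Qed.
Lemma mul_assoc_r {G} rel (a b c : term G) : aeq rel (tMul (tMul a b) c) (tMul a (tMul b c)).
Proof. symmetry. apply ax_mul_assoc. Qed.
Lemma scal_RR {G} rel (a : term G) r1 r2 :
  aeq rel (tScal (RtoC r1) (tScal (RtoC r2) a)) (tScal (RtoC (r1 * r2)) a).
Proof. rewrite scal_scal, Cmul_RtoC. reflexivity. Qed.
Lemma scal_eq {G} rel (a : term G) r1 r2 : r1 = r2 -> aeq rel (tScal (RtoC r1) a) (tScal (RtoC r2) a).
Proof. intros ->. reflexivity. Qed.
Lemma scal_one {G} rel (a : term G) : aeq rel (tScal (RtoC 1) a) a.
Proof. rewrite RtoC_1. apply ax_scal_1. Qed.

Lemma scal_inv {G} rel (a b : term G) q : q <> 0 ->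
  aeq rel a (tScal (RtoC q) b) -> aeq rel b (tScal (RtoC (/ q)) a).
Proof.
  intros Hq E. rewrite E, scal_RR, (scal_eq _ _ _ 1) by (field; auto). rewrite scal_one. reflexivity.
Qed.

Lemma mul_ctx_scal {G} rel (a b c d t : term G) r : aeq rel (tMul a b) (tScal (RtoC r) (tMul c d)) ->
  aeq rel (tMul a (tMul b t)) (tScal (RtoC r) (tMul c (tMul d t))).
Proof. intros E. rewrite ax_mul_assoc, E, scal_mul_l, mul_assoc_r. reflexivity. Qed.
Lemma mul_ctx {G} rel (a b c d t : term G) : aeq rel (tMul a b) (tMul c d) ->
  aeq rel (tMul a (tMul b t)) (tMul c (tMul d t)).
Proof. intros E. rewrite ax_mul_assoc, E, mul_assoc_r. reflexivity. Qed.

Lemma scal1_cancel {G} rel (a b : term G) :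
  aeq rel (tScal (RtoC 1) a) (tScal (RtoC 1) b) -> aeq rel a b.
Proof. intros E. rewrite <- (scal_one rel a), <- (scal_one rel b). auto. Qed.


Section S5Identities.
Context (q : R) (Hq : q <> 0).

Lemma rel_zz i j : idx_lt i j -> aeq (s5rel q) (tMul (z i) (z j)) (tScal (RtoC q) (tMul (z j) (z i))).
Proof. intros. apply aeq_rel. constructor; auto. Qed.
Lemma rel_zsz i j : i <> j ->
  aeq (s5rel q) (tMul (zstar i) (z j)) (tScal (RtoC q) (tMul (z j) (zstar i))).
Proof. intros. apply aeq_rel. constructor; auto. Qed.
Lemma rel_zz_inv i j : idx_lt i j ->
  aeq (s5rel q) (tMul (z j) (z i)) (tScal (RtoC (/ q)) (tMul (z i) (z j))).
Proof. intros. apply scal_inv; auto. apply rel_zz; auto. Qed.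
Lemma rel_zsz_inv i j : i <> j ->
  aeq (s5rel q) (tMul (z j) (zstar i)) (tScal (RtoC (/ q)) (tMul (zstar i) (z j))).
Proof. intros. apply scal_inv; auto. apply rel_zsz; auto. Qed.
Lemma rel_ss i j : idx_lt i j ->
  aeq (s5rel q) (tMul (zstar j) (zstar i)) (tScal (RtoC q) (tMul (zstar i) (zstar j))).
Proof.
  intros Hij. unfold zstar. rewrite <- ax_star_mul, (rel_zz i j Hij), ax_star_scal, Cconj_RtoC,
    ax_star_mul. reflexivity.
Qed.
Lemma rel_11 : aeq (s5rel q) (tMul (z I1) (zstar I1)) (tMul (zstar I1) (z I1)).
Proof. symmetry. apply aeq_rel. constructor. Qed.

(* One normalisation step: move z_1, z_1^* to the left and z_i before z_j^* and z_i^*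
   before z_j for i < j, collecting the powers of q. *)
Local Ltac normalize_step :=
  first
  [ rewrite scal_mul_r | rewrite scal_mul_l | rewrite scal_RR | rewrite mul_assoc_r
  | rewrite (mul_ctx_scal _ _ _ _ _ _ _ (rel_zsz_inv I1 I2 ltac:(discriminate)))
  | rewrite (mul_ctx_scal _ _ _ _ _ _ _ (rel_zsz_inv I1 I3 ltac:(discriminate)))
  | rewrite (mul_ctx_scal _ _ _ _ _ _ _ (rel_zsz_inv I2 I1 ltac:(discriminate)))
  | rewrite (mul_ctx_scal _ _ _ _ _ _ _ (rel_zsz_inv I2 I3 ltac:(discriminate)))
  | rewrite (mul_ctx_scal _ _ _ _ _ _ _ (rel_zsz_inv I3 I1 ltac:(discriminate)))
  | rewrite (mul_ctx_scal _ _ _ _ _ _ _ (rel_zsz_inv I3 I2 ltac:(discriminate)))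
  | rewrite (mul_ctx _ _ _ _ _ _ rel_11)
  | rewrite (mul_ctx_scal _ _ _ _ _ _ _ (rel_ss I1 I2 I))
  | rewrite (mul_ctx_scal _ _ _ _ _ _ _ (rel_ss I1 I3 I))
  | rewrite (mul_ctx_scal _ _ _ _ _ _ _ (rel_ss I2 I3 I))
  | rewrite (mul_ctx_scal _ _ _ _ _ _ _ (rel_zz_inv I1 I2 I))
  | rewrite (mul_ctx_scal _ _ _ _ _ _ _ (rel_zz_inv I1 I3 I))
  | rewrite (mul_ctx_scal _ _ _ _ _ _ _ (rel_zz_inv I2 I3 I))
  | rewrite (rel_zsz_inv I1 I2 ltac:(discriminate))
  | rewrite (rel_zsz_inv I1 I3 ltac:(discriminate))
  | rewrite (rel_zsz_inv I2 I1 ltac:(discriminate))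
  | rewrite (rel_zsz_inv I2 I3 ltac:(discriminate))
  | rewrite (rel_zsz_inv I3 I1 ltac:(discriminate))
  | rewrite (rel_zsz_inv I3 I2 ltac:(discriminate))
  | rewrite rel_11
  | rewrite (rel_ss I1 I2 I) | rewrite (rel_ss I1 I3 I) | rewrite (rel_ss I2 I3 I)
  | rewrite (rel_zz_inv I1 I2 I) | rewrite (rel_zz_inv I1 I3 I) | rewrite (rel_zz_inv I2 I3 I) ].

(* An identity between monomials is proved by normalising both sides (each written as
   1 * monomial so that both become scalar multiples) and comparing the scalars. *)
Local Ltac solve_q :=
  apply scal1_cancel; unfold pterm in *; repeat normalize_step;
  try (apply scal_eq; field; auto).

Lemma p11_pk1 k : k <> I1 ->
  aeq (s5rel q) (tMul (pterm I1 I1) (pterm k I1))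
    (tScal (RtoC (/ (q * q))) (tMul (pterm k I1) (pterm I1 I1))).
Proof. intros Hk. destruct k; [congruence| |]; solve_q. Qed.

Lemma p11_pkl k l : k <> I1 -> l <> I1 ->
  aeq (s5rel q) (tMul (pterm I1 I1) (pterm k l)) (tMul (pterm k l) (pterm I1 I1)).
Proof. intros Hk Hl. destruct k; [congruence| |]; destruct l; try congruence; solve_q. Qed.

Lemma pkl_p11 k l : k <> I1 -> l <> I1 ->
  aeq (s5rel q) (tMul (pterm k l) (pterm I1 I1))
    (tScal (RtoC (/ (q * q))) (tMul (pterm k I1) (pterm I1 l))).
Proof. intros Hk Hl. destruct k; [congruence| |]; destruct l; try congruence; solve_q. Qed.

Lemma p12_p13 :
  aeq (s5rel q) (tMul (pterm I1 I2) (pterm I1 I3)) (tScal (RtoC q) (tMul (pterm I1 I3) (pterm I1 I2))).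
Proof. solve_q. Qed.
Lemma p21_p13 : aeq (s5rel q) (tMul (pterm I2 I1) (pterm I1 I3))
  (tScal (RtoC (q * q * q)) (tMul (pterm I1 I3) (pterm I2 I1))).
Proof. solve_q. Qed.
Lemma p31_p12 : aeq (s5rel q) (tMul (pterm I3 I1) (pterm I1 I2))
  (tScal (RtoC (q * q * q)) (tMul (pterm I1 I2) (pterm I3 I1))).
Proof. solve_q. Qed.

Lemma p11_sphere : aeq (s5rel q)
  (tAdd (tAdd (tMul (pterm I1 I1) (pterm I1 I1)) (tMul (pterm I1 I2) (pterm I2 I1)))
        (tMul (pterm I1 I3) (pterm I3 I1)))
  (pterm I1 I1).
Proof.
  unfold pterm. symmetry.
  transitivity (tMul (zstar I1) (tMul tOne (z I1))). { rewrite ax_mul_1l. reflexivity. }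
  rewrite <- (aeq_rel _ _ _ (s5_sphere q)).
  rewrite !ax_mul_addl, !ax_mul_addr. unfold zstar. repeat rewrite mul_assoc_r. reflexivity.
Qed.

Lemma z1_zkzk k : k <> I1 -> forall t,
  aeq (s5rel q) (tMul (z I1) (tMul (z k) (tMul (zstar k) t)))
    (tMul (z k) (tMul (zstar k) (tMul (z I1) t))).
Proof.
  intros Hk t. assert (Hlt : idx_lt I1 k) by (destruct k; simpl; auto).
  rewrite (mul_ctx_scal _ _ _ _ _ _ _ (rel_zz I1 k Hlt)),
    (mul_ctx_scal _ _ _ _ _ _ _ (rel_zsz_inv k I1 Hk)), scal_mul_r, scal_RR.
  rewrite (scal_eq _ _ _ 1) by (field; auto). apply scal_one.
Qed.

Lemma zkzk_z1star k : k <> I1 -> forall t,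
  aeq (s5rel q) (tMul (z k) (tMul (zstar k) (tMul (zstar I1) t)))
    (tMul (zstar I1) (tMul (z k) (tMul (zstar k) t))).
Proof.
  intros Hk t. assert (Hlt : idx_lt I1 k) by (destruct k; simpl; auto).
  rewrite (mul_ctx_scal _ _ _ _ _ _ _ (rel_ss I1 k Hlt)), scal_mul_r,
    (mul_ctx_scal _ _ _ _ _ _ _ (rel_zsz_inv I1 k (not_eq_sym Hk))), scal_RR.
  rewrite (scal_eq _ _ _ 1) by (field; auto). apply scal_one.
Qed.

Lemma z1_zkzk_z1star k : k <> I1 ->
  aeq (s5rel q) (tMul (z I1) (tMul (tMul (z k) (zstar k)) (zstar I1)))
    (tMul (pterm I1 k) (pterm k I1)).
Proof.
  intros Hk. unfold pterm. repeat rewrite mul_assoc_r.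
  rewrite (z1_zkzk k Hk), rel_11, (zkzk_z1star k Hk). reflexivity.
Qed.

Lemma pk1_p1k k : k <> I1 -> aeq (s5rel q) (tMul (pterm k I1) (pterm I1 k))
  (tScal (RtoC (q * q)) (tMul (z I1) (tMul (tMul (zstar k) (z k)) (zstar I1)))).
Proof.
  intros Hk. unfold pterm. repeat rewrite mul_assoc_r.
  rewrite (mul_ctx_scal _ _ _ _ _ _ _ (rel_zsz k I1 Hk)), (rel_zsz I1 k (not_eq_sym Hk)),
    !scal_mul_r, scal_RR.
  apply aeq_scal. reflexivity.
Qed.

Lemma z1_z1z1_z1star : aeq (s5rel q) (tMul (z I1) (tMul (tMul (z I1) (zstar I1)) (zstar I1)))
  (tMul (pterm I1 I1) (pterm I1 I1)).
Proof. solve_q. Qed.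

(* the relations [z_k^*, z_k] = (1 - q^2) (...) translate into
   q^-2 p_k1 p_1k = p_1k p_k1 + (1 - q^2) (sum_(j < k) p_1j p_j1) *)
Lemma p21_p12 : aeq (s5rel q) (tScal (RtoC (/ (q * q))) (tMul (pterm I2 I1) (pterm I1 I2)))
  (tAdd (tMul (pterm I1 I2) (pterm I2 I1))
        (tScal (RtoC (1 - q * q)) (tMul (pterm I1 I1) (pterm I1 I1)))).
Proof.
  rewrite (pk1_p1k I2 ltac:(discriminate)), scal_RR.
  rewrite (scal_eq _ _ _ 1) by (field; auto). rewrite scal_one.
  rewrite (aeq_rel _ _ _ (s5_c2 q)). fold (zstar I1) (zstar I2).
  rewrite ax_mul_addl, ax_mul_addr. apply aeq_add.
  - apply z1_zkzk_z1star; discriminate.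
  - rewrite scal_mul_l, scal_mul_r. replace (1 - q ^ 2) with (1 - q * q) by ring.
    apply aeq_scal, z1_z1z1_z1star.
Qed.

Lemma p31_p13 : aeq (s5rel q) (tScal (RtoC (/ (q * q))) (tMul (pterm I3 I1) (pterm I1 I3)))
  (tAdd (tMul (pterm I1 I3) (pterm I3 I1))
        (tScal (RtoC (1 - q * q))
           (tAdd (tMul (pterm I1 I1) (pterm I1 I1)) (tMul (pterm I1 I2) (pterm I2 I1))))).
Proof.
  rewrite (pk1_p1k I3 ltac:(discriminate)), scal_RR.
  rewrite (scal_eq _ _ _ 1) by (field; auto). rewrite scal_one.
  rewrite (aeq_rel _ _ _ (s5_c3 q)). fold (zstar I1) (zstar I2) (zstar I3).
  rewrite ax_mul_addl, ax_mul_addr. apply aeq_add.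
  - apply z1_zkzk_z1star; discriminate.
  - rewrite scal_mul_l, scal_mul_r. replace (1 - q ^ 2) with (1 - q * q) by ring.
    apply aeq_scal. rewrite ax_mul_addl, ax_mul_addr. apply aeq_add.
    + apply z1_z1z1_z1star.
    + apply z1_zkzk_z1star; discriminate.
Qed.

End S5Identities.

Lemma pterm_star q i j : aeq (s5rel q) (pterm j i) (tStar (pterm i j)).
Proof. unfold pterm, zstar. rewrite ax_star_mul, ax_star_inv. reflexivity. Qed.

(** * 7. Construction of Z1, Z2, Z3 *)

Definition pgen (i j : idx) : term (idx * idx) := tGen (i, j).

Section CP2Images.
Context (q : R) (Hq : q <> 0) (H : Hilbert) (P : idx -> idx -> op H) (hP : CP2_rep q H P).

Local Ltac transfer f g L x :=
  let E := fresh "E" in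
  pose proof (proj2 hP f g L) as E; simpl in E; unfold pvals in E; simpl in E;
  exact (f_equal (fun F => F x) E).

Lemma P_bounded i j : bounded_op (P i j).
Proof. apply hP. Qed.
Lemma P_add i j x y : P i j (vadd x y) = vadd (P i j x) (P i j y).
Proof. apply (P_bounded i j). Qed.
Lemma P_scal i j a x : P i j (vscal a x) = vscal a (P i j x).
Proof. apply (P_bounded i j). Qed.

Lemma P_adj i j : adj_rel (P i j) (P j i).
Proof.
  pose proof (proj2 hP (pgen j i) (tStar (pgen i j)) (pterm_star q i j)) as E.
  simpl in E. unfold pvals in E; simpl in E. rewrite E. apply adjoint_rel, hP.
Qed.

Lemma P_sphere x :
  P I1 I1 x = vadd (vadd (P I1 I1 (P I1 I1 x)) (P I1 I2 (P I2 I1 x))) (P I1 I3 (P I3 I1 x)).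
Proof.
  symmetry. transfer (tAdd (tAdd (tMul (pgen I1 I1) (pgen I1 I1)) (tMul (pgen I1 I2) (pgen I2 I1)))
    (tMul (pgen I1 I3) (pgen I3 I1))) (pgen I1 I1) (p11_sphere q) x.
Qed.

Lemma P11_form x :
  Re (inner (P I1 I1 x) x) = nsq (P I1 I1 x) + nsq (P I2 I1 x) + nsq (P I3 I1 x).
Proof.
  rewrite P_sphere at 1. rewrite !inner_add_l, (P_adj I1 I1 (P I1 I1 x) x),
    (P_adj I1 I2 (P I2 I1 x) x), (P_adj I1 I3 (P I3 I1 x) x), (inner_sym (P I1 I1 x)),
    (inner_sym (P I2 I1 x)), (inner_sym (P I3 I1 x)).
  simpl. unfold nsq. ring.
Qed.

Lemma P11_pos : pos_op (P I1 I1).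
Proof.
  split; [apply hP|split]. apply P_adj.
  intros x. rewrite P11_form. pose proof (nsq_nonneg (P I1 I1 x)).
  pose proof (nsq_nonneg (P I2 I1 x)). pose proof (nsq_nonneg (P I3 I1 x)). lra.
Qed.

Lemma P11_Pk1 k x : k <> I1 ->
  P I1 I1 (P k I1 x) = vscal (RtoC (/ (q * q))) (P k I1 (P I1 I1 x)).
Proof.
  intros Hk. transfer (tMul (pgen I1 I1) (pgen k I1))
    (tScal (RtoC (/ (q * q))) (tMul (pgen k I1) (pgen I1 I1))) (p11_pk1 q Hq k Hk) x.
Qed.

Lemma P11_Pkl k l x : k <> I1 -> l <> I1 -> P I1 I1 (P k l x) = P k l (P I1 I1 x).
Proof.
  intros Hk Hl. transfer (tMul (pgen I1 I1) (pgen k l)) (tMul (pgen k l) (pgen I1 I1))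
    (p11_pkl q Hq k l Hk Hl) x.
Qed.

Lemma Pkl_P11 k l x : k <> I1 -> l <> I1 ->
  P k l (P I1 I1 x) = vscal (RtoC (/ (q * q))) (P k I1 (P I1 l x)).
Proof.
  intros Hk Hl. transfer (tMul (pgen k l) (pgen I1 I1))
    (tScal (RtoC (/ (q * q))) (tMul (pgen k I1) (pgen I1 l))) (pkl_p11 q Hq k l Hk Hl) x.
Qed.

Lemma P12_P13 x : P I1 I2 (P I1 I3 x) = vscal (RtoC q) (P I1 I3 (P I1 I2 x)).
Proof.
  transfer (tMul (pgen I1 I2) (pgen I1 I3)) (tScal (RtoC q) (tMul (pgen I1 I3) (pgen I1 I2)))
    (p12_p13 q Hq) x.
Qed.

Lemma P21_P13 x : P I2 I1 (P I1 I3 x) = vscal (RtoC (q * q * q)) (P I1 I3 (P I2 I1 x)).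
Proof.
  transfer (tMul (pgen I2 I1) (pgen I1 I3)) (tScal (RtoC (q * q * q)) (tMul (pgen I1 I3) (pgen I2 I1)))
    (p21_p13 q Hq) x.
Qed.

Lemma P31_P12 x : P I3 I1 (P I1 I2 x) = vscal (RtoC (q * q * q)) (P I1 I2 (P I3 I1 x)).
Proof.
  transfer (tMul (pgen I3 I1) (pgen I1 I2)) (tScal (RtoC (q * q * q)) (tMul (pgen I1 I2) (pgen I3 I1)))
    (p31_p12 q Hq) x.
Qed.

Lemma vscal_inv_sq (u v : H) : vscal (RtoC (/ (q * q))) u = v -> u = vscal (RtoC (q * q)) v.
Proof.
  intros E. rewrite <- E, vscal_assoc, Cmul_RtoC.
  replace (q * q * / (q * q)) with 1 by (field; auto). rewrite RtoC_1, vscal_1. auto.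
Qed.

Lemma P21_P12 x : P I2 I1 (P I1 I2 x) =
  vscal (RtoC (q * q)) (vadd (P I1 I2 (P I2 I1 x)) (vscal (RtoC (1 - q * q)) (P I1 I1 (P I1 I1 x)))).
Proof.
  apply vscal_inv_sq.
  transfer (tScal (RtoC (/ (q * q))) (tMul (pgen I2 I1) (pgen I1 I2)))
    (tAdd (tMul (pgen I1 I2) (pgen I2 I1)) (tScal (RtoC (1 - q * q)) (tMul (pgen I1 I1) (pgen I1 I1))))
    (p21_p12 q Hq) x.
Qed.

Lemma P31_P13 x : P I3 I1 (P I1 I3 x) =
  vscal (RtoC (q * q)) (vadd (P I1 I3 (P I3 I1 x))
    (vscal (RtoC (1 - q * q)) (vadd (P I1 I1 (P I1 I1 x)) (P I1 I2 (P I2 I1 x))))).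
Proof.
  apply vscal_inv_sq.
  transfer (tScal (RtoC (/ (q * q))) (tMul (pgen I3 I1) (pgen I1 I3)))
    (tAdd (tMul (pgen I1 I3) (pgen I3 I1)) (tScal (RtoC (1 - q * q))
      (tAdd (tMul (pgen I1 I1) (pgen I1 I1)) (tMul (pgen I1 I2) (pgen I2 I1)))))
    (p31_p13 q Hq) x.
Qed.

End CP2Images.

(* a family containing an irreducible family is irreducible: each of its invariant
   subspaces is invariant under the smaller family *)
Lemma irreducible_mono {H : Hilbert} (A B : op H -> Prop) :
  (forall T, A T -> B T) -> irreducible_family A -> irreducible_family B.
Proof. intros AB [Hne Hirr]. split; auto. Qed.

Section Lift.
Context (q : R) (Hq : q <> 0) (H : Hilbert) (P : idx -> idx -> op H) (hP : CP2_rep q H P).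

Context (Z1 : op H) (Z1_pos : pos_op Z1) (Z1_ker : trivial_kernel Z1)
  (Z1_sq : forall x, Z1 (Z1 x) = P I1 I1 x)
  (Z1_q : forall Y, bounded_op Y ->
     (forall x, P I1 I1 (Y x) = vscal (RtoC (/ (q * q))) (Y (P I1 I1 x))) ->
     forall x, Z1 (Y x) = vscal (RtoC (/ q)) (Y (Z1 x)))
  (Z1_comm : forall Y, bounded_op Y -> (forall x, P I1 I1 (Y x) = Y (P I1 I1 x)) ->
     forall x, Z1 (Y x) = Y (Z1 x)).

Lemma Z1_bounded : bounded_op Z1.
Proof. apply Z1_pos. Qed.
Lemma Z1_selfadj : adj_rel Z1 Z1.
Proof. apply Z1_pos. Qed.

(* |P_k1 x|^2 <= <P11 x, x> = |Z1 x|^2 *)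
Lemma Pk1_le_Z1 k x : norm (P k I1 x) <= norm (Z1 x).
Proof.
  apply norm_le_of_sq. apply norm_nonneg. rewrite norm_sq.
  assert (E : nsq (Z1 x) = Re (inner (P I1 I1 x) x)) by (rewrite <- Z1_sq, Z1_selfadj; reflexivity).
  rewrite E, (P11_form _ _ _ hP). pose proof (nsq_nonneg (P I1 I1 x)).
  pose proof (nsq_nonneg (P I2 I1 x)). pose proof (nsq_nonneg (P I3 I1 x)). destruct k; lra.
Qed.

(* the Douglas factors E_k with E_k Z1 = P_k1; Z_k := E_k^* for k = 2, 3 *)
Definition Efac (k : idx) : op H := douglas Z1 (P k I1).

Lemma Efac_spec k : bounded_op (Efac k) /\ forall x, Efac k (Z1 x) = P k I1 x.
Proof.
  apply douglas_factor. apply Z1_bounded. apply Z1_selfadj. exact Z1_ker. apply hP.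
  apply Pk1_le_Z1.
Qed.

Lemma Efac_bounded k : bounded_op (Efac k).
Proof. apply Efac_spec. Qed.
Lemma Efac_Z1 k x : Efac k (Z1 x) = P k I1 x.
Proof. apply Efac_spec. Qed.

Definition Zfam (i : idx) : op H := match i with I1 => Z1 | _ => adjoint (Efac i) end.

Lemma Zfam_bounded i : bounded_op (Zfam i).
Proof. destruct i; simpl. apply Z1_bounded. all: apply adjoint_bounded, Efac_bounded. Qed.

(* Z1 E_k^* = P_1k, the adjoint of E_k Z1 = P_k1 *)
Lemma Z1_adjE k x : Z1 (adjoint (Efac k) x) = P I1 k x.
Proof.
  assert (A : (fun x => Z1 (adjoint (Efac k) x)) = P I1 k).
  { apply (adj_rel_unique (fun x => Efac k (Z1 x))).
    - apply (adj_rel_comp (Efac k) Z1). apply adjoint_rel, Efac_bounded. apply Z1_selfadj.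
    - replace (fun x => Efac k (Z1 x)) with (P k I1) by (extensionality y; rewrite Efac_Z1; auto).
      apply (P_adj _ _ _ hP). }
  exact (f_equal (fun F => F x) A).
Qed.

(* P11 P_k1 = q^-2 P_k1 P11 passes to Z1 E_k = q^-1 E_k Z1, after cancelling Z1 on the right *)
Lemma Z1_E k y : k <> I1 -> Z1 (Efac k y) = vscal (RtoC (/ q)) (Efac k (Z1 y)).
Proof.
  intros Hk.
  assert (B : (fun y => Z1 (Efac k y)) = (fun y => vscal (RtoC (/ q)) (Efac k (Z1 y)))).
  { apply (cancel_right Z1). apply Z1_bounded. apply Z1_selfadj. exact Z1_ker.
    - apply (bounded_comp Z1 (Efac k)). apply Z1_bounded. apply Efac_bounded.
    - apply (bounded_scal _ (fun y => Efac k (Z1 y))), (bounded_comp (Efac k) Z1).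
      apply Efac_bounded. apply Z1_bounded.
    - intros x. rewrite !Efac_Z1. apply Z1_q. apply hP.
      intros w. apply (P11_Pk1 _ Hq _ _ hP); auto. }
  exact (f_equal (fun F => F y) B).
Qed.

Lemma adjE_Z1 k y : k <> I1 ->
  adjoint (Efac k) (Z1 y) = vscal (RtoC (/ q)) (Z1 (adjoint (Efac k) y)).
Proof.
  intros Hk.
  assert (C : (fun y => adjoint (Efac k) (Z1 y))
              = (fun y => vscal (RtoC (/ q)) (Z1 (adjoint (Efac k) y)))).
  { apply (adj_rel_unique (fun y => Z1 (Efac k y))).
    - apply (adj_rel_comp Z1 (Efac k)). apply Z1_selfadj. apply adjoint_rel, Efac_bounded.
    - replace (fun y => Z1 (Efac k y)) with (fun y => vscal (RtoC (/ q)) (Efac k (Z1 y)))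
        by (extensionality z; rewrite Z1_E; auto).
      pose proof (adj_rel_scal (RtoC (/ q)) _ _ (adj_rel_comp (Efac k) Z1 _ _
        (adjoint_rel _ (Efac_bounded k)) Z1_selfadj)) as E.
      rewrite Cconj_RtoC in E. exact E. }
  exact (f_equal (fun F => F y) C).
Qed.

(* E_k E_l^* = P_kl: both sides agree after composing with Z1 on each side *)
Lemma E_adjE k l x : k <> I1 -> l <> I1 -> Efac k (adjoint (Efac l) x) = P k l x.
Proof.
  intros Hk Hl.
  assert (E : (fun x => Efac k (adjoint (Efac l) x)) = P k l).
  { apply (sandwich Z1); auto.
    - apply (bounded_comp (Efac k) (adjoint (Efac l))). apply Efac_bounded.
      apply adjoint_bounded, Efac_bounded.
    - apply hP.
    - intros y. rewrite adjE_Z1, Z1_adjE, (proj2 (proj1 (Efac_bounded k))),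
        (proj2 (proj1 Z1_bounded)), Z1_E, Efac_Z1 by auto.
      rewrite (Z1_comm (P k l)), Z1_sq, (Pkl_P11 _ Hq _ _ hP) by
        (auto; apply hP || (intros; apply (P11_Pkl _ Hq _ _ hP); auto)).
      rewrite vscal_assoc, Cmul_RtoC. f_equal. f_equal. field. auto. }
  exact (f_equal (fun F => F x) E).
Qed.

Lemma Z1_add x y : Z1 (vadd x y) = vadd (Z1 x) (Z1 y).
Proof. apply Z1_bounded. Qed.
Lemma Z1_scal a x : Z1 (vscal a x) = vscal a (Z1 x).
Proof. apply Z1_bounded. Qed.
Lemma Efac_add k x y : Efac k (vadd x y) = vadd (Efac k x) (Efac k y).
Proof. apply Efac_bounded. Qed.
Lemma Efac_scal k a x : Efac k (vscal a x) = vscal a (Efac k x).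
Proof. apply Efac_bounded. Qed.
Lemma adjE_add k x y : adjoint (Efac k) (vadd x y) = vadd (adjoint (Efac k) x) (adjoint (Efac k) y).
Proof. apply adjoint_bounded, Efac_bounded. Qed.
Lemma adjE_scal k a x : adjoint (Efac k) (vscal a x) = vscal a (adjoint (Efac k) x).
Proof. apply adjoint_bounded, Efac_bounded. Qed.
Lemma adjoint_Z1 : adjoint Z1 = Z1.
Proof. apply adjoint_eq, Z1_selfadj. Qed.
Lemma adjoint_adjE k : adjoint (adjoint (Efac k)) = Efac k.
Proof. apply adjoint_adjoint, Efac_bounded. Qed.
Lemma adjE_Z1_P k x : k <> I1 -> adjoint (Efac k) (Z1 x) = vscal (RtoC (/ q)) (P I1 k x).
Proof. intros Hk. rewrite adjE_Z1, Z1_adjE; auto. Qed.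
Lemma Z1_E_P k x : k <> I1 -> Z1 (Efac k x) = vscal (RtoC (/ q)) (P k I1 x).
Proof. intros Hk. rewrite Z1_E, Efac_Z1; auto. Qed.

Local Ltac push :=
  repeat first
  [ rewrite Z1_add | rewrite Z1_scal | rewrite Efac_add | rewrite Efac_scal
  | rewrite adjE_add | rewrite adjE_scal | rewrite (P_add _ _ _ hP) | rewrite (P_scal _ _ _ hP)
  | rewrite Z1_sq | rewrite Z1_adjE | rewrite Efac_Z1
  | rewrite (adjE_Z1_P I2) by discriminate | rewrite (adjE_Z1_P I3) by discriminate
  | rewrite (Z1_E_P I2) by discriminate | rewrite (Z1_E_P I3) by discriminate
  | rewrite (E_adjE I2 I2) by discriminate | rewrite (E_adjE I2 I3) by discriminate
  | rewrite (E_adjE I3 I2) by discriminate | rewrite (E_adjE I3 I3) by discriminate ].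

Local Ltac vfield := apply inner_ext_r; intro; vexp; apply C_ext; simpl; field; auto.

Local Ltac eval_Z := simpl; rewrite ?adjoint_Z1, ?adjoint_adjE.

Lemma Zfam_pterm i j : eval Zfam (tMul (tStar (z i)) (z j)) = P i j.
Proof. destruct i, j; eval_Z; extensionality x; push; auto. Qed.

Lemma Zfam_sandwich a b : (forall x, Z1 (eval Zfam a (Z1 x)) = Z1 (eval Zfam b (Z1 x))) ->
  eval Zfam a = eval Zfam b.
Proof. apply sandwich; auto; apply eval_bounded, Zfam_bounded. Qed.

Lemma Zfam_comm i j : idx_lt i j ->
  eval Zfam (tMul (z i) (z j)) = eval Zfam (tScal (RtoC q) (tMul (z j) (z i))).
Proof.
  intros Hij. destruct i, j; simpl in Hij; try contradiction.
  - eval_Z. extensionality x. push. vfield.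
  - eval_Z. extensionality x. push. vfield.
  - apply Zfam_sandwich. intros x. eval_Z. push. rewrite (P12_P13 _ Hq _ _ hP). vfield.
Qed.

Lemma Zfam_star i j : i <> j ->
  eval Zfam (tMul (tStar (z i)) (z j)) = eval Zfam (tScal (RtoC q) (tMul (z j) (tStar (z i)))).
Proof.
  intros Hij. destruct i, j; try congruence.
  1, 2, 3, 5: eval_Z; extensionality x; push; vfield.
  - apply Zfam_sandwich. intros x. eval_Z. push. rewrite (P21_P13 _ Hq _ _ hP). vfield.
  - apply Zfam_sandwich. intros x. eval_Z. push. rewrite (P31_P12 _ Hq _ _ hP). vfield.
Qed.

Lemma Zfam_c1 : eval Zfam (tMul (tStar (z I1)) (z I1)) = eval Zfam (tMul (z I1) (tStar (z I1))).
Proof. eval_Z. reflexivity. Qed.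

Lemma Zfam_c2 : eval Zfam (tMul (tStar (z I2)) (z I2)) =
  eval Zfam (tAdd (tMul (z I2) (tStar (z I2)))
                  (tScal (RtoC (1 - q ^ 2)) (tMul (z I1) (tStar (z I1))))).
Proof. apply Zfam_sandwich. intros x. eval_Z. push. rewrite (P21_P12 _ Hq _ _ hP). vfield. Qed.

Lemma Zfam_c3 : eval Zfam (tMul (tStar (z I3)) (z I3)) =
  eval Zfam (tAdd (tMul (z I3) (tStar (z I3))) (tScal (RtoC (1 - q ^ 2))
    (tAdd (tMul (z I1) (tStar (z I1))) (tMul (z I2) (tStar (z I2)))))).
Proof. apply Zfam_sandwich. intros x. eval_Z. push. rewrite (P31_P13 _ Hq _ _ hP). vfield. Qed.

Lemma Zfam_sphere : eval Zfam (tAdd (tAdd (tMul (z I1) (tStar (z I1))) (tMul (z I2) (tStar (z I2))))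
                                    (tMul (z I3) (tStar (z I3)))) = eval Zfam tOne.
Proof. apply Zfam_sandwich. intros x. eval_Z. push. symmetry. apply (P_sphere _ _ _ hP). Qed.

Lemma Zfam_S5_rep : S5_rep q H Zfam.
Proof.
  split. apply Zfam_bounded. apply eval_aeq. apply Zfam_bounded.
  intros a b Hab. destruct Hab.
  - apply Zfam_comm; auto.
  - apply Zfam_star; auto.
  - apply Zfam_c1.
  - apply Zfam_c2.
  - apply Zfam_c3.
  - apply Zfam_sphere.
Qed.

Lemma Zfam_restricts f : eval Zfam (cp2_emb f) = eval (pvals P) f.
Proof.
  induction f; simpl; rewrite ?IHf, ?IHf1, ?IHf2; auto.
  destruct g as [i j]. apply Zfam_pterm.
Qed.

Lemma Zfam_matrix :
  P I1 I1 = ocomp (Zfam I1) (Zfam I1) /\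
  P I1 I2 = qscal q (ocomp (Zfam I2) (Zfam I1)) /\
  P I1 I3 = qscal q (ocomp (Zfam I3) (Zfam I1)) /\
  P I2 I1 = qscal q (ocomp (Zfam I1) (adjoint (Zfam I2))) /\
  P I2 I2 = ocomp (adjoint (Zfam I2)) (Zfam I2) /\
  P I2 I3 = ocomp (adjoint (Zfam I2)) (Zfam I3) /\
  P I3 I1 = qscal q (ocomp (Zfam I1) (adjoint (Zfam I3))) /\
  P I3 I2 = ocomp (adjoint (Zfam I3)) (Zfam I2) /\
  P I3 I3 = ocomp (adjoint (Zfam I3)) (Zfam I3).
Proof.
  unfold ocomp, qscal; simpl; rewrite ?adjoint_adjE.
  repeat split; extensionality x; push; try reflexivity; vfield.
Qed.

Lemma Zfam_lifts :
  (forall i, bounded_op (Zfam i)) /\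
  positive_op (Zfam I1) /\ trivial_kernel (Zfam I1) /\
  (P I1 I1 = ocomp (Zfam I1) (Zfam I1) /\
   P I1 I2 = qscal q (ocomp (Zfam I2) (Zfam I1)) /\
   P I1 I3 = qscal q (ocomp (Zfam I3) (Zfam I1)) /\
   P I2 I1 = qscal q (ocomp (Zfam I1) (adjoint (Zfam I2))) /\
   P I2 I2 = ocomp (adjoint (Zfam I2)) (Zfam I2) /\
   P I2 I3 = ocomp (adjoint (Zfam I2)) (Zfam I3) /\
   P I3 I1 = qscal q (ocomp (Zfam I1) (adjoint (Zfam I3))) /\
   P I3 I2 = ocomp (adjoint (Zfam I3)) (Zfam I2) /\
   P I3 I3 = ocomp (adjoint (Zfam I3)) (Zfam I3)) /\
  S5_rep q H Zfam /\
  (forall i j, eval Zfam (tMul (tStar (z i)) (z j)) = P i j) /\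
  (CP2_irreducible P -> S5_irreducible Zfam).
Proof.
  split; [exact Zfam_bounded|]. split; [split; apply Z1_pos|]. split; [exact Z1_ker|].
  split; [exact Zfam_matrix|]. split; [exact Zfam_S5_rep|]. split; [exact Zfam_pterm|].
  apply irreducible_mono. intros T [f ->]. exists (cp2_emb f). symmetry. apply Zfam_restricts.
Qed.

End Lift.

Lemma P11_sqrt (q : R) (hq : 0 < q < 1) (H : Hilbert) (P : idx -> idx -> op H)
  (hP : CP2_rep q H P) :
  exists Z1 : op H, pos_op Z1 /\ (forall x, Z1 (Z1 x) = P I1 I1 x) /\
  (forall Y, bounded_op Y -> (forall x, P I1 I1 (Y x) = vscal (RtoC (/ (q * q))) (Y (P I1 I1 x))) ->
     forall x, Z1 (Y x) = vscal (RtoC (/ q)) (Y (Z1 x))) /\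
  (forall Y, bounded_op Y -> (forall x, P I1 I1 (Y x) = Y (P I1 I1 x)) ->
     forall x, Z1 (Y x) = Y (Z1 x)).
Proof.
  destruct (pos_sqrt _ (P11_pos _ _ _ hP)) as [W [Wpos [Wsq Wrule]]].
  exists W. split; [exact Wpos|]. split; [exact Wsq|]. split.
  - intros Y Yb HY x. rewrite (Wrule (/ (q * q)) Y); auto.
    + rewrite sqrt_inv, sqrt_square by lra. reflexivity.
    + apply Rinv_0_lt_compat. nra.
  - intros Y Yb HY x. rewrite (Wrule 1 Y), sqrt_1, RtoC_1, vscal_1; auto. lra.
    intros y. rewrite RtoC_1, vscal_1. auto.
Qed.

Theorem lemmaD1 (q : R) (hq : 0 < q < 1) (H : Hilbert) (P : idx -> idx -> op H)
  (hP : CP2_rep q H P) (hker : trivial_kernel (P I1 I1)) :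
  exists Z : idx -> op H,
    (forall i, bounded_op (Z i)) /\
    positive_op (Z I1) /\ trivial_kernel (Z I1) /\
    (P I1 I1 = ocomp (Z I1) (Z I1) /\
     P I1 I2 = qscal q (ocomp (Z I2) (Z I1)) /\
     P I1 I3 = qscal q (ocomp (Z I3) (Z I1)) /\
     P I2 I1 = qscal q (ocomp (Z I1) (adjoint (Z I2))) /\
     P I2 I2 = ocomp (adjoint (Z I2)) (Z I2) /\
     P I2 I3 = ocomp (adjoint (Z I2)) (Z I3) /\
     P I3 I1 = qscal q (ocomp (Z I1) (adjoint (Z I3))) /\
     P I3 I2 = ocomp (adjoint (Z I3)) (Z I2) /\
     P I3 I3 = ocomp (adjoint (Z I3)) (Z I3)) /\
    S5_rep q H Z /\
    (forall i j, eval Z (tMul (tStar (z i)) (z j)) = P i j) /\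
    (CP2_irreducible P -> S5_irreducible Z).
Proof.
  assert (Hq : q <> 0) by lra.
  destruct (P11_sqrt q hq H P hP) as [Z1 [Z1pos [Z1sq [Z1q Z1comm]]]].
  (* ker Z1 is contained in ker (Z1^2) = ker P11 = 0 *)
  assert (Z1ker : trivial_kernel Z1).
  { intros x E. apply hker. rewrite <- Z1sq, E. apply lin_zero, Z1pos. }
  exists (Zfam H P Z1).
  exact (Zfam_lifts q Hq H P hP Z1 Z1pos Z1ker Z1sq Z1q Z1comm).
Qed.
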